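(* Let $I$ be a closed ideal of $A^+$ and let $f\in A^+$ with $f|_\Gamma\in I^A$. Then the division ideal $I(f)=\{g\in A^+: fg\in I\}$ is weak-$*$ closed in $A^+$.
   Context: $\Gamma$ is the unit circle, $A(\Gamma)$ the algebra of continuous functions on $\Gamma$ with absolutely convergent Fourier series, $A^+=\{f\in A(\Gamma):\hat f(n)=0\ (n<0)\}$. $I^A$ is the closed ideal of $A(\Gamma)$ generated by $I$. The weak-$*$ topology on $A^+$ is obtained by identifying $A^+$ via $f\mapsto(\hat f(n))_{n\ge0}$ with $\ell^1(\mathbb N)$, the dual of $c_0(\mathbb N)$. *)

From Stdlib Require Import Reals ZArith List.
From Coquelicot Require Import Coquelicot.
Open Scope R_scope.

(* Elements of A(Gamma) are represented by their Fourier coefficient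
   sequences  a : Z -> C  (a n = \hat f (n)).  Under this identification
   A(Gamma) is l^1(Z) with convolution product and norm sum |a n|. *)
Definition seqZ := Z -> C.

Definition sumZR (u : Z -> R) : R :=
  Series (fun n => u (Z.of_nat n)) + Series (fun n => u (- Z.of_nat (S n))%Z).

Definition sumZ (a : seqZ) : C :=
  (sumZR (fun n => fst (a n)), sumZR (fun n => snd (a n))).

Definition inA (a : seqZ) : Prop :=
  ex_series (fun n => Cmod (a (Z.of_nat n))) /\
  ex_series (fun n => Cmod (a (- Z.of_nat (S n))%Z)).

Definition inAplus (a : seqZ) : Prop :=
  inA a /\ forall n : Z, (n < 0)%Z -> a n = 0%C.

Definition normA (a : seqZ) : R := sumZR (fun n => Cmod (a n)).

(* algebra operations (product = convolution of Fourier coefficients,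
   i.e. pointwise product of the functions on Gamma) *)
Definition addA (a b : seqZ) : seqZ := fun n => (a n + b n)%C.
Definition subA (a b : seqZ) : seqZ := fun n => (a n - b n)%C.
Definition scalA (c : C) (a : seqZ) : seqZ := fun n => (c * a n)%C.
Definition zeroA : seqZ := fun _ => 0%C.
Definition mulA (a b : seqZ) : seqZ := fun n => sumZ (fun k => (a k * b (n - k)%Z)%C).

Definition closed_ideal_A (J : seqZ -> Prop) : Prop :=
  (forall a, J a -> inA a) /\
  J zeroA /\
  (forall a b, J a -> J b -> J (addA a b)) /\
  (forall c a, J a -> J (scalA c a)) /\
  (forall h a, inA h -> J a -> J (mulA h a)) /\
  (forall a, inA a ->
     (forall eps, 0 < eps -> exists b, J b /\ normA (subA a b) < eps) -> J a).

Definition closed_ideal_Aplus (I : seqZ -> Prop) : Prop :=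
  (forall a, I a -> inAplus a) /\
  I zeroA /\
  (forall a b, I a -> I b -> I (addA a b)) /\
  (forall c a, I a -> I (scalA c a)) /\
  (forall h a, inAplus h -> I a -> I (mulA h a)) /\
  (forall a, inAplus a ->
     (forall eps, 0 < eps -> exists b, I b /\ normA (subA a b) < eps) -> I a).

Definition gen_closed_ideal_A (I : seqZ -> Prop) (a : seqZ) : Prop :=
  forall J, closed_ideal_A J -> (forall g, I g -> J g) -> J a.

Definition division_ideal (I : seqZ -> Prop) (f : seqZ) (g : seqZ) : Prop :=
  inAplus g /\ I (mulA f g).

(* weak-* topology on A^+ = l^1(N) = (c_0(N))^* *)
Definition in_c0 (c : nat -> C) : Prop := is_lim_seq (fun n => Cmod (c n)) 0.

Definition pairing (a : seqZ) (c : nat -> C) : C :=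
  (Series (fun n => fst (a (Z.of_nat n) * c n)%C),
   Series (fun n => snd (a (Z.of_nat n) * c n)%C)).

Definition weakstar_open (U : seqZ -> Prop) : Prop :=
  (forall a, U a -> inAplus a) /\
  forall a, U a ->
    exists (cs : list (nat -> C)) (eps : R),
      0 < eps /\ (forall c, In c cs -> in_c0 c) /\
      forall b, inAplus b ->
        (forall c, In c cs -> Cmod (pairing b c - pairing a c)%C < eps) -> U b.

Definition weakstar_closed (S : seqZ -> Prop) : Prop :=
  (forall a, S a -> inAplus a) /\
  weakstar_open (fun a => inAplus a /\ ~ S a).

From Stdlib Require Import Reals Lra Lia ZArith List ClassicalEpsilon Classical.
From Coquelicot Require Import Coquelicot.
Open Scope R_scope.

(* Let g lie in A^+ outside I(f), so that fg is not in I.  By Hahn-Banach there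
   is a bounded functional psi on A^+ vanishing on I with psi(fg) <> 0.  The h in
   A(Gamma) with psi(z^m h) -> 0 form a closed ideal of A(Gamma) containing I,
   hence containing f.  So c_m := psi(z^m f) defines an element of c_0, and
   b |-> <b, c> = psi(fb) is a weak-* continuous functional vanishing on I(f)
   but not at g.
   Hahn-Banach is proved directly: a real functional dominated by the norm is
   extended one vector at a time along x, z^0, i z^0, z^1, i z^1, ... (a dense
   sequence), then extended by continuity and complexified. *)

(** * Partial sums and series of reals *)

(* Unlike Coquelicot's [sum_n], the bound [K] is exclusive. *)
Fixpoint psum (u : nat -> R) (K : nat) : R :=
  match K with 0%nat => 0 | S K => psum u K + u K end.

Lemma is_series_psum u l : is_series u l <-> is_lim_seq (psum u) l.
Proof.
  assert (E : forall K, sum_n u K = psum u (S K)).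
  { induction K; simpl; [rewrite sum_O; lra | rewrite sum_Sn, IHK; reflexivity]. }
  split; intro H.
  - apply (is_lim_seq_incr_n _ 1).
    eapply is_lim_seq_ext; [|exact H]. intro n. rewrite E. f_equal. lia.
  - apply (is_lim_seq_incr_n _ 1) in H.
    change (is_lim_seq (sum_n u) l).
    eapply is_lim_seq_ext; [|exact H]. intro n. rewrite E. f_equal. lia.
Qed.

Lemma psum_ext_loc u v K : (forall k, (k < K)%nat -> u k = v k) -> psum u K = psum v K.
Proof. intro H; induction K; simpl; auto. rewrite IHK, H; auto. Qed.

Lemma psum_ext u v K : (forall k, u k = v k) -> psum u K = psum v K.
Proof. intro H; apply psum_ext_loc; auto. Qed.

Lemma psum_plus u v K : psum (fun k => u k + v k) K = psum u K + psum v K.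
Proof. induction K; simpl; lra. Qed.

Lemma psum_scal c u K : psum (fun k => c * u k) K = c * psum u K.
Proof. induction K; simpl; [ring | rewrite IHK; ring]. Qed.

Lemma psum_zero K : psum (fun _ => 0) K = 0.
Proof. induction K; simpl; lra. Qed.

Lemma psum_le u v K : (forall k, u k <= v k) -> psum u K <= psum v K.
Proof. intro H; induction K; simpl; [lra | specialize (H K); lra]. Qed.

Lemma psum_Rabs u K : Rabs (psum u K) <= psum (fun k => Rabs (u k)) K.
Proof.
  induction K; simpl; [rewrite Rabs_R0; lra|].
  eapply Rle_trans; [apply Rabs_triang | lra].
Qed.

Lemma psum_nonneg u K : (forall k, 0 <= u k) -> 0 <= psum u K.
Proof. intro H; induction K; simpl; [lra | specialize (H K); lra]. Qed.

Lemma psum_add u K M : psum u (K + M) = psum u K + psum (fun j => u (K + j)%nat) M.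
Proof.
  induction M; simpl; [rewrite Nat.add_0_r; lra|].
  rewrite Nat.add_succ_r. simpl. lra.
Qed.

Lemma psum_single u n0 K : (forall n, n <> n0 -> u n = 0) ->
  psum u K = if Compare_dec.lt_dec n0 K then u n0 else 0.
Proof.
  intro H. induction K; simpl.
  - destruct (Compare_dec.lt_dec n0 0); [lia | auto].
  - rewrite IHK. destruct (Compare_dec.lt_dec n0 K), (Compare_dec.lt_dec n0 (S K)); try lia.
    + rewrite (H K) by lia; ring.
    + assert (n0 = K) by lia. subst; ring.
    + rewrite (H K) by lia; ring.
Qed.

Lemma psum_rev u q : psum u q = psum (fun j => u (q - 1 - j)%nat) q.
Proof.
  assert (Head : forall v p, psum v (S p) = v 0%nat + psum (fun j => v (S j)) p).
  { intros v p. induction p; simpl in *; [ring | rewrite IHp; ring]. }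
  induction q; [reflexivity|].
  rewrite (Head (fun j => u (S q - 1 - j)%nat)).
  change (psum u q + u q = u (S q - 1 - 0)%nat + psum (fun j => u (S q - 1 - S j)%nat) q).
  rewrite IHq. replace (S q - 1 - 0)%nat with q by lia. rewrite Rplus_comm. f_equal.
  apply psum_ext. intro j. f_equal. lia.
Qed.

Lemma psum_pairs u K :
  psum u (2 * K + 1) = u 0%nat + psum (fun n => u (2 * n + 1)%nat + u (2 * n + 2)%nat) K.
Proof.
  induction K; [simpl; ring|].
  replace (2 * S K + 1)%nat with (S (S (2 * K + 1))) by lia.
  cbn [psum]. rewrite IHK.
  replace (S (2 * K + 1)) with (2 * K + 2)%nat by lia. ring.
Qed.

Lemma is_lim_seq_Rle x y (a b : R) :
  (forall n, x n <= y n) -> is_lim_seq x a -> is_lim_seq y b -> a <= b.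
Proof. intros H Hx Hy. exact (is_lim_seq_le x y a b H Hx Hy). Qed.

Lemma is_lim_seq_0_Rabs_le x y :
  (forall n, Rabs (x n) <= y n) -> is_lim_seq y 0 -> is_lim_seq x 0.
Proof.
  intros H Hy. apply (is_lim_seq_le_le (fun n => - y n) x y).
  - intro n; specialize (H n); apply Rabs_le_between in H; lra.
  - replace (Finite 0) with (Rbar_opp 0) by (simpl; f_equal; lra).
    exact (proj1 (is_lim_seq_opp y 0) Hy).
  - exact Hy.
Qed.

Lemma ex_series_Rabs_le u v : (forall k, Rabs (u k) <= v k) -> ex_series v -> ex_series u.
Proof. intros H Hv. exact (ex_series_le u v H Hv). Qed.

Lemma ex_series_Rscal c u : ex_series u -> ex_series (fun n => c * u n).
Proof. intro H. exact (ex_series_scal_l c u H). Qed.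

Lemma is_lim_seq_psum_Series u : ex_series u -> is_lim_seq (psum u) (Series u).
Proof. intro H. apply is_series_psum, Series_correct, H. Qed.

Lemma Series_of_psum_lim u (l : R) : is_lim_seq (psum u) l -> ex_series u /\ Series u = l.
Proof.
  intro H. apply is_series_psum in H.
  split; [exists l; exact H | apply is_series_unique; exact H].
Qed.

Lemma psum_le_Series u K : (forall k, 0 <= u k) -> ex_series u -> psum u K <= Series u.
Proof.
  intros Hp He.
  apply (is_lim_seq_Rle (fun _ => psum u K) (fun n => psum u (n + K))).
  - intro n. rewrite Nat.add_comm, psum_add.
    pose proof (psum_nonneg (fun j => u (K + j)%nat) n (fun j => Hp _)). lra.
  - apply is_lim_seq_const.
  - apply (is_lim_seq_incr_n (psum u) K). apply is_lim_seq_psum_Series; auto.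
Qed.

Lemma Series_nonneg u : (forall k, 0 <= u k) -> ex_series u -> 0 <= Series u.
Proof. intros Hp He. apply (Rle_trans _ (psum u 0)); [simpl; lra | apply psum_le_Series; auto]. Qed.

Lemma Rabs_le_Series a k : ex_series (fun k => Rabs (a k)) ->
  Rabs (a k) <= Series (fun k => Rabs (a k)).
Proof.
  intro H. apply (Rle_trans _ (psum (fun k => Rabs (a k)) (S k))).
  - simpl. pose proof (psum_nonneg (fun k => Rabs (a k)) k (fun _ => Rabs_pos _)). lra.
  - apply psum_le_Series; auto. intro; apply Rabs_pos.
Qed.

Lemma Series_le_ex u v : (forall k, u k <= v k) -> ex_series u -> ex_series v ->
  Series u <= Series v.
Proof.
  intros H Hu Hv.
  apply (is_lim_seq_Rle (psum u) (psum v)); [intro; apply psum_le; auto | |];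
    apply is_lim_seq_psum_Series; auto.
Qed.

Lemma Series_Rabs_le u v : (forall k, Rabs (u k) <= v k) -> ex_series v ->
  Rabs (Series u) <= Series v.
Proof.
  intros H Hv.
  apply (is_lim_seq_Rle (fun K => Rabs (psum u K)) (psum v)).
  - intro K. eapply Rle_trans; [apply psum_Rabs | apply psum_le; auto].
  - apply (is_lim_seq_abs _ (Series u)). apply is_lim_seq_psum_Series.
    apply (ex_series_Rabs_le u v); auto.
  - apply is_lim_seq_psum_Series; auto.
Qed.

Lemma Series_zero : Series (fun _ => 0) = 0.
Proof.
  apply (Series_of_psum_lim _ 0). eapply is_lim_seq_ext; [|apply is_lim_seq_const].
  intro K. symmetry. apply psum_zero.
Qed.

Lemma Series_single u n0 : (forall n, n <> n0 -> u n = 0) -> ex_series u /\ Series u = u n0.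
Proof.
  intro H. apply Series_of_psum_lim. apply (is_lim_seq_incr_n _ (S n0)).
  eapply is_lim_seq_ext; [|apply is_lim_seq_const]. intro n. rewrite (psum_single u n0) by auto.
  destruct (Compare_dec.lt_dec n0 (n + S n0)); auto; lia.
Qed.

Lemma Series_finite u K : (forall n, (n >= K)%nat -> u n = 0) -> Series u = psum u K.
Proof.
  intro H. apply (Series_of_psum_lim u (psum u K)). apply (is_lim_seq_incr_n _ K).
  eapply is_lim_seq_ext; [|apply is_lim_seq_const]. intro n.
  rewrite Nat.add_comm, psum_add, (psum_ext (fun j => u (K + j)%nat) (fun _ => 0)), psum_zero by (intro; apply H; lia).
  ring.
Qed.

Lemma Series_split a q : ex_series a ->
  ex_series (fun k => a (q + k)%nat) /\ Series a = psum a q + Series (fun k => a (q + k)%nat).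
Proof.
  intro H. assert (Htail : ex_series (fun k => a (q + k)%nat)) by (apply ex_series_incr_n; auto).
  split; auto.
  assert (L1 : is_lim_seq (fun n => psum a (n + q)) (Series a)).
  { apply (is_lim_seq_incr_n (psum a) q). apply is_lim_seq_psum_Series; auto. }
  assert (L2 : is_lim_seq (fun n => psum a (n + q)) (psum a q + Series (fun k => a (q + k)%nat))).
  { apply (is_lim_seq_ext (fun n => psum a q + psum (fun k => a (q + k)%nat) n)).
    - intro n. rewrite Nat.add_comm, psum_add. reflexivity.
    - apply is_lim_seq_plus'; [apply is_lim_seq_const | apply is_lim_seq_psum_Series; auto]. }
  assert (E := eq_trans (eq_sym (is_lim_seq_unique _ _ L1)) (is_lim_seq_unique _ _ L2)).
  injection E; auto.
Qed.

Lemma Series_tail_le v U N : (forall k, 0 <= v k <= U k) -> ex_series U ->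
  Series v - psum v N <= Series U - psum U N.
Proof.
  intros H HU.
  assert (Hv : ex_series v) by (apply (ex_series_Rabs_le v U); auto;
    intro k; rewrite Rabs_pos_eq; apply H).
  destruct (Series_split v N Hv) as [_ Ev]. destruct (Series_split U N HU) as [HUt EU].
  rewrite Ev, EU. ring_simplify. apply Series_le; auto.
Qed.

Lemma Series_tail_Rabs a K : ex_series (fun k => Rabs (a k)) ->
  Rabs (Series a - psum a K) <= Series (fun k => Rabs (a k)) - psum (fun k => Rabs (a k)) K.
Proof.
  intro H.
  destruct (Series_split a K (ex_series_Rabs a H)) as [_ Ea].
  destruct (Series_split _ K H) as [Ht Eabs].
  rewrite Ea, Eabs.
  replace (psum a K + Series (fun k => a (K + k)%nat) - psum a K)
    with (Series (fun k => a (K + k)%nat)) by ring.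
  ring_simplify. apply Series_Rabs. exact Ht.
Qed.

Lemma is_lim_seq_Series_dominated (f : nat -> nat -> R) U :
  (forall K n, 0 <= f K n <= U n) -> ex_series U ->
  (forall n, is_lim_seq (fun K => f K n) 0) -> is_lim_seq (fun K => Series (f K)) 0.
Proof.
  intros Hb HU Hl. apply is_lim_seq_spec. intros eps.
  assert (e2 : 0 < eps / 2) by (destruct eps; simpl; lra).
  assert (HS := is_lim_seq_psum_Series U HU). apply is_lim_seq_spec in HS.
  destruct (HS (mkposreal _ e2)) as [N HN]. simpl in HN.
  assert (Hhead : is_lim_seq (fun K => psum (f K) N) 0).
  { clear HN. induction N; simpl; [apply is_lim_seq_const|].
    replace (Finite 0) with (Finite (0 + 0)) by (f_equal; ring).
    apply is_lim_seq_plus'; auto. }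
  apply is_lim_seq_spec in Hhead.
  destruct (Hhead (mkposreal _ e2)) as [M HM]. simpl in HM.
  exists M. intros K HK. specialize (HM K HK). specialize (HN N (le_n N)).
  pose proof (Series_tail_le (f K) U N (Hb K) HU) as Ht.
  assert (0 <= Series (f K)).
  { apply Series_nonneg; [intro; apply Hb|].
    apply (ex_series_Rabs_le (f K) U); auto. intro n; rewrite Rabs_pos_eq; apply Hb. }
  assert (0 <= psum (f K) N) by (apply psum_nonneg; intro; apply Hb).
  assert (psum U N <= Series U) by (apply psum_le_Series; auto; intro k; specialize (Hb 0%nat k); lra).
  rewrite Rminus_0_r, Rabs_pos_eq in * by lra.
  rewrite Rabs_minus_sym, Rabs_pos_eq in HN by lra. lra.
Qed.

Lemma Series_swap (u : nat -> nat -> R) :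
  (forall n, ex_series (fun k => Rabs (u n k))) ->
  ex_series (fun n => Series (fun k => Rabs (u n k))) ->
  (forall k, ex_series (fun n => u n k)) /\
  ex_series (fun k => Series (fun n => u n k)) /\
  Series (fun k => Series (fun n => u n k)) = Series (fun n => Series (fun k => u n k)).
Proof.
  intros H1 H2.
  set (U := fun n => Series (fun k => Rabs (u n k))).
  assert (HU : forall n k, Rabs (u n k) <= U n) by (intros; apply Rabs_le_Series; auto).
  assert (Hpsum : forall n K, 0 <= psum (fun k => Rabs (u n k)) K <= U n).
  { intros n K. split; [apply psum_nonneg | apply psum_le_Series; auto]; intro; apply Rabs_pos. }
  assert (Hcol : forall k, ex_series (fun n => u n k)) by (intro k; apply (ex_series_Rabs_le _ U); auto).
  split; auto.
  assert (Hrow : ex_series (fun n => Series (fun k => u n k))).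
  { apply (ex_series_Rabs_le _ U); auto. intro n; apply Series_Rabs_le; auto. intro; apply Rle_refl. }
  assert (Hswap : forall K, psum (fun k => Series (fun n => u n k)) K = Series (fun n => psum (u n) K)).
  { induction K; simpl; [symmetry; apply Series_zero|].
    rewrite IHK, <- Series_plus; auto.
    apply (ex_series_Rabs_le _ U); auto. intro n.
    eapply Rle_trans; [apply psum_Rabs | apply Hpsum]. }
  apply Series_of_psum_lim.
  apply (is_lim_seq_ext (fun K => Series (fun n => Series (fun k => u n k)) -
                                  Series (fun n => Series (fun k => u n k) - psum (u n) K))).
  { intro K. rewrite Hswap, Series_minus; [ring | auto|].
    apply (ex_series_Rabs_le _ U); auto. intro n.
    eapply Rle_trans; [apply psum_Rabs | apply Hpsum]. }
  replace (Finite (Series (fun n => Series (fun k => u n k)))) with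
    (Finite (Series (fun n => Series (fun k => u n k)) - 0)) by (f_equal; ring).
  apply is_lim_seq_minus'; [apply is_lim_seq_const|].
  apply (is_lim_seq_0_Rabs_le _ (fun K => Series (fun n => U n - psum (fun k => Rabs (u n k)) K))).
  - intro K. apply Series_Rabs_le.
    + intro n. apply Series_tail_Rabs. auto.
    + apply (ex_series_Rabs_le _ U); auto. intro n. specialize (Hpsum n K).
      rewrite Rabs_pos_eq; lra.
  - apply (is_lim_seq_Series_dominated _ U); auto.
    + intros K n. specialize (Hpsum n K). lra.
    + intro n. replace (Finite 0) with (Finite (U n - U n)) by (f_equal; ring).
      apply is_lim_seq_minus'; [apply is_lim_seq_const | apply is_lim_seq_psum_Series; auto].
Qed.

(** * Series over Z *)

Definition ex_seriesZ (v : Z -> R) : Prop :=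
  ex_series (fun n => v (Z.of_nat n)) /\ ex_series (fun n => v (- Z.of_nat (S n))%Z).

Lemma Z_nat_cases k : (exists n, k = Z.of_nat n) \/ (exists n, k = (- Z.of_nat (S n))%Z).
Proof.
  destruct (Z_le_gt_dec 0 k).
  - left. exists (Z.to_nat k). lia.
  - right. exists (Z.to_nat (- k - 1)). lia.
Qed.

Lemma ex_seriesZ_Rabs_le u v : (forall k, Rabs (u k) <= v k) -> ex_seriesZ v -> ex_seriesZ u.
Proof.
  intros H [H1 H2].
  split; [apply (ex_series_Rabs_le _ _ (fun n => H _) H1) | apply (ex_series_Rabs_le _ _ (fun n => H _) H2)].
Qed.

Lemma ex_seriesZ_plus u v : ex_seriesZ u -> ex_seriesZ v -> ex_seriesZ (fun k => u k + v k).
Proof.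
  intros [H1 H2] [H3 H4]. split; [apply (ex_series_plus _ _ H1 H3) | apply (ex_series_plus _ _ H2 H4)].
Qed.

Lemma ex_seriesZ_scal c u : ex_seriesZ u -> ex_seriesZ (fun k => c * u k).
Proof. intros [H1 H2]. split; [apply ex_series_Rscal, H1 | apply ex_series_Rscal, H2]. Qed.

Lemma sumZR_ext u v : (forall k, u k = v k) -> sumZR u = sumZR v.
Proof. intro H. unfold sumZR. f_equal; apply Series_ext; intro; apply H. Qed.

Lemma sumZR_plus u v : ex_seriesZ u -> ex_seriesZ v ->
  sumZR (fun k => u k + v k) = sumZR u + sumZR v.
Proof. intros [H1 H2] [H3 H4]. unfold sumZR. rewrite !Series_plus; auto. ring. Qed.

Lemma sumZR_scal c u : sumZR (fun k => c * u k) = c * sumZR u.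
Proof. unfold sumZR. rewrite !Series_scal_l. ring. Qed.

Lemma sumZR_zero u : (forall k, u k = 0) -> sumZR u = 0.
Proof.
  intro H. unfold sumZR. rewrite (Series_ext _ (fun _ => 0)),
    (Series_ext (fun n => u (- Z.of_nat (S n))%Z) (fun _ => 0)), Series_zero by auto. ring.
Qed.

Lemma sumZR_nonneg b : (forall n, 0 <= b n) -> ex_seriesZ b -> 0 <= sumZR b.
Proof.
  intros H [H1 H2]. unfold sumZR.
  pose proof (Series_nonneg _ (fun k => H _) H1). pose proof (Series_nonneg _ (fun k => H _) H2). lra.
Qed.

Lemma sumZR_le u v : (forall k, u k <= v k) -> ex_seriesZ u -> ex_seriesZ v -> sumZR u <= sumZR v.
Proof.
  intros H [H1 H2] [H3 H4]. unfold sumZR.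
  pose proof (Series_le_ex _ _ (fun n => H (Z.of_nat n)) H1 H3).
  pose proof (Series_le_ex _ _ (fun n => H (- Z.of_nat (S n))%Z) H2 H4). lra.
Qed.

Lemma sumZR_Rabs_le u v : (forall k, Rabs (u k) <= v k) -> ex_seriesZ v -> Rabs (sumZR u) <= sumZR v.
Proof.
  intros H [H1 H2]. unfold sumZR. eapply Rle_trans; [apply Rabs_triang|].
  pose proof (Series_Rabs_le (fun n => u (Z.of_nat n)) _ (fun n => H _) H1).
  pose proof (Series_Rabs_le (fun n => u (- Z.of_nat (S n))%Z) _ (fun n => H _) H2). lra.
Qed.

Lemma Series_nonneg_le_sumZR b : (forall n, 0 <= b n) -> ex_seriesZ b ->
  Series (fun n => b (Z.of_nat n)) <= sumZR b /\ Series (fun n => b (- Z.of_nat (S n))%Z) <= sumZR b.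
Proof.
  intros H [H1 H2]. unfold sumZR.
  pose proof (Series_nonneg _ (fun n => H (Z.of_nat n)) H1).
  pose proof (Series_nonneg _ (fun n => H (- Z.of_nat (S n))%Z) H2). lra.
Qed.

Lemma sumZR_single u k0 : (forall k, k <> k0 -> u k = 0) -> ex_seriesZ u /\ sumZR u = u k0.
Proof.
  intro H. unfold ex_seriesZ, sumZR.
  destruct (Z_nat_cases k0) as [[n0 ->] | [n0 ->]].
  - destruct (Series_single (fun n => u (Z.of_nat n)) n0) as [A1 A2]; [intros n Hn; apply H; lia|].
    destruct (Series_single (fun n => u (- Z.of_nat (S n))%Z) 0%nat) as [B1 B2];
      [intros n Hn; apply H; lia|].
    rewrite A2, B2, (H (- Z.of_nat 1)%Z) by lia. split; auto. ring.
  - destruct (Series_single (fun n => u (Z.of_nat n)) 0%nat) as [A1 A2]; [intros n Hn; apply H; lia|].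
    destruct (Series_single (fun n => u (- Z.of_nat (S n))%Z) n0) as [B1 B2];
      [intros n Hn; apply H; lia|].
    rewrite A2, B2, (H (Z.of_nat 0)) by lia. split; auto. ring.
Qed.

Lemma sumZR_finite u N : (forall k, (k < 0 \/ k > Z.of_nat N)%Z -> u k = 0) ->
  sumZR u = psum (fun n => u (Z.of_nat n)) (S N).
Proof.
  intro H. unfold sumZR.
  rewrite (Series_finite (fun n => u (Z.of_nat n)) (S N)) by (intros n Hn; apply H; lia).
  rewrite (Series_ext (fun n => u (- Z.of_nat (S n))%Z) (fun _ => 0)) by (intro n; apply H; lia).
  rewrite Series_zero. ring.
Qed.

Lemma Series_shift_le_sumZR b s : (forall n, 0 <= b n) -> ex_seriesZ b ->
  ex_series (fun n => b (Z.of_nat n + s)%Z) /\ Series (fun n => b (Z.of_nat n + s)%Z) <= sumZR b.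
Proof.
  intros Hp [H1 H2].
  destruct (Z_nat_cases s) as [[q ->] | [p ->]].
  - assert (Heq : forall n, b (Z.of_nat n + Z.of_nat q)%Z = b (Z.of_nat (q + n))) by (intro; f_equal; lia).
    destruct (Series_split _ q H1) as [E1 E2].
    split; [eapply ex_series_ext; [|exact E1]; intro; rewrite Heq; auto|].
    rewrite (Series_ext _ _ Heq).
    pose proof (psum_nonneg (fun n => b (Z.of_nat n)) q (fun _ => Hp _)).
    pose proof (Series_nonneg _ (fun n => Hp (- Z.of_nat (S n))%Z) H2). unfold sumZR. lra.
  - assert (Heq : forall n, b (Z.of_nat (S p + n) + - Z.of_nat (S p))%Z = b (Z.of_nat n)) by
      (intro; f_equal; lia).
    assert (E : ex_series (fun n => b (Z.of_nat n + - Z.of_nat (S p))%Z)).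
    { apply (ex_series_incr_n _ (S p)). eapply ex_series_ext; [|exact H1]. intro; rewrite Heq; auto. }
    split; auto.
    destruct (Series_split _ (S p) E) as [_ E2]. rewrite E2, (Series_ext _ _ Heq), psum_rev.
    rewrite (psum_ext_loc _ (fun j => b (- Z.of_nat (S j))%Z))
      by (intros j Hj; f_equal; lia).
    pose proof (psum_le_Series (fun j => b (- Z.of_nat (S j))%Z) (S p) (fun _ => Hp _) H2).
    unfold sumZR. lra.
Qed.

Lemma is_lim_seq_sumZR_dominated (f : nat -> Z -> R) U :
  (forall m k, 0 <= f m k <= U k) -> ex_seriesZ U ->
  (forall k, is_lim_seq (fun m => f m k) 0) -> is_lim_seq (fun m => sumZR (f m)) 0.
Proof.
  intros Hb [U1 U2] Hl. unfold sumZR.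
  replace (Finite 0) with (Finite (0 + 0)) by (f_equal; ring).
  apply is_lim_seq_plus'.
  - apply (is_lim_seq_Series_dominated (fun m n => f m (Z.of_nat n)) (fun n => U (Z.of_nat n))); auto.
  - apply (is_lim_seq_Series_dominated (fun m n => f m (- Z.of_nat (S n))%Z)
                                        (fun n => U (- Z.of_nat (S n))%Z)); auto.
Qed.

Lemma sumZR_Series_swap (u : Z -> nat -> R) :
  (forall k, ex_series (fun n => Rabs (u k n))) ->
  ex_seriesZ (fun k => Series (fun n => Rabs (u k n))) ->
  (forall n, ex_seriesZ (fun k => u k n)) /\
  ex_series (fun n => sumZR (fun k => u k n)) /\
  Series (fun n => sumZR (fun k => u k n)) = sumZR (fun k => Series (fun n => u k n)).
Proof.
  intros H1 [H2 H3].
  destruct (Series_swap (fun a b => u (Z.of_nat a) b) (fun a => H1 _) H2) as [P1 [P2 P3]].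
  destruct (Series_swap (fun a b => u (- Z.of_nat (S a))%Z b) (fun a => H1 _) H3) as [N1 [N2 N3]].
  split; [intro n; split; [apply P1 | apply N1]|].
  split; [apply (ex_series_plus _ _ P2 N2)|].
  unfold sumZR. rewrite Series_plus, P3, N3; auto.
Qed.

Lemma Series_sumZR_swap (u : nat -> Z -> R) :
  (forall n, ex_seriesZ (fun k => Rabs (u n k))) ->
  ex_series (fun n => sumZR (fun k => Rabs (u n k))) ->
  (forall k, ex_series (fun n => u n k)) /\
  ex_seriesZ (fun k => Series (fun n => u n k)) /\
  sumZR (fun k => Series (fun n => u n k)) = Series (fun n => sumZR (fun k => u n k)).
Proof.
  intros H1 H2.
  assert (Hhalf : forall n (v : nat -> R), ex_series (fun a => Rabs (v a)) ->
    Series (fun a => Rabs (v a)) <= sumZR (fun k => Rabs (u n k)) ->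
    Rabs (Series (fun a => Rabs (v a))) <= sumZR (fun k => Rabs (u n k)) /\
    Rabs (Series v) <= sumZR (fun k => Rabs (u n k))).
  { intros n v Hv Hle. pose proof (Series_nonneg _ (fun a => Rabs_pos (v a)) Hv).
    rewrite Rabs_pos_eq by lra. split; [lra|].
    eapply Rle_trans; [apply Series_Rabs, Hv | exact Hle]. }
  assert (Hpos : forall n,
    Rabs (Series (fun a => Rabs (u n (Z.of_nat a)))) <= sumZR (fun k => Rabs (u n k)) /\
    Rabs (Series (fun a => u n (Z.of_nat a))) <= sumZR (fun k => Rabs (u n k))).
  { intro n. apply Hhalf; [apply H1|].
    apply (Series_nonneg_le_sumZR (fun k => Rabs (u n k))); [intro; apply Rabs_pos | apply H1]. }
  assert (Hneg : forall n,
    Rabs (Series (fun a => Rabs (u n (- Z.of_nat (S a))%Z))) <= sumZR (fun k => Rabs (u n k)) /\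
    Rabs (Series (fun a => u n (- Z.of_nat (S a))%Z)) <= sumZR (fun k => Rabs (u n k))).
  { intro n. apply Hhalf; [apply H1|].
    apply (Series_nonneg_le_sumZR (fun k => Rabs (u n k))); [intro; apply Rabs_pos | apply H1]. }
  destruct (Series_swap (fun n a => u n (Z.of_nat a)) (fun n => proj1 (H1 n))
              (ex_series_Rabs_le _ _ (fun n => proj1 (Hpos n)) H2)) as [P1 [P2 P3]].
  destruct (Series_swap (fun n a => u n (- Z.of_nat (S a))%Z) (fun n => proj2 (H1 n))
              (ex_series_Rabs_le _ _ (fun n => proj1 (Hneg n)) H2)) as [N1 [N2 N3]].
  split; [intro k; destruct (Z_nat_cases k) as [[n ->] | [n ->]]; [apply P1 | apply N1]|].
  split; [split; auto|].
  unfold sumZR. rewrite P3, N3, <- Series_plus; auto.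
  - exact (ex_series_Rabs_le _ _ (fun n => proj2 (Hpos n)) H2).
  - exact (ex_series_Rabs_le _ _ (fun n => proj2 (Hneg n)) H2).
Qed.

(** * Complex series and the algebra A(Gamma) *)

Ltac C_componentwise :=
  apply injective_projections; unfold Cminus, Cmult, Cplus, Copp, RtoC in *; simpl in *; ring.

Lemma Rabs_fst_le_Cmod z : Rabs (fst z) <= Cmod z.
Proof. eapply Rle_trans; [apply Rmax_l | apply Rmax_Cmod]. Qed.

Lemma Rabs_snd_le_Cmod z : Rabs (snd z) <= Cmod z.
Proof. eapply Rle_trans; [apply Rmax_r | apply Rmax_Cmod]. Qed.

Lemma Cmod_le_Rabs_fst_snd z : Cmod z <= Rabs (fst z) + Rabs (snd z).
Proof.
  pose proof (Rabs_pos (fst z)); pose proof (Rabs_pos (snd z)).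
  unfold Cmod. rewrite <- (sqrt_Rsqr (Rabs (fst z) + Rabs (snd z))) by lra.
  apply sqrt_le_1_alt. unfold Rsqr.
  assert (Rabs (fst z) * Rabs (fst z) = fst z ^ 2) by (rewrite <- Rabs_mult, Rabs_pos_eq; [ring | nra]).
  assert (Rabs (snd z) * Rabs (snd z) = snd z ^ 2) by (rewrite <- Rabs_mult, Rabs_pos_eq; [ring | nra]).
  nra.
Qed.

Definition CSeries (a : nat -> C) : C := (Series (fun n => fst (a n)), Series (fun n => snd (a n))).

Section CSeries.

Variable a : nat -> C.
Hypothesis Ha : ex_series (fun n => Cmod (a n)).

Lemma ex_series_fst : ex_series (fun n => fst (a n)).
Proof. exact (ex_series_Rabs_le _ _ (fun n => Rabs_fst_le_Cmod (a n)) Ha). Qed.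

Lemma ex_series_snd : ex_series (fun n => snd (a n)).
Proof. exact (ex_series_Rabs_le _ _ (fun n => Rabs_snd_le_Cmod (a n)) Ha). Qed.

Lemma Cmod_CSeries_le : Cmod (CSeries a) <= 2 * Series (fun n => Cmod (a n)).
Proof.
  eapply Rle_trans; [apply Cmod_le_Rabs_fst_snd|]. unfold CSeries; simpl.
  pose proof (Series_Rabs_le _ _ (fun n => Rabs_fst_le_Cmod (a n)) Ha).
  pose proof (Series_Rabs_le _ _ (fun n => Rabs_snd_le_Cmod (a n)) Ha). lra.
Qed.

Lemma CSeries_plus b : ex_series (fun n => Cmod (b n)) ->
  CSeries (fun n => a n + b n)%C = (CSeries a + CSeries b)%C.
Proof.
  intros Hb. pose proof ex_series_fst; pose proof ex_series_snd.
  unfold CSeries, Cplus; simpl. f_equal; apply Series_plus; auto.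
  - exact (ex_series_Rabs_le _ _ (fun n => Rabs_fst_le_Cmod (b n)) Hb).
  - exact (ex_series_Rabs_le _ _ (fun n => Rabs_snd_le_Cmod (b n)) Hb).
Qed.

Lemma CSeries_scal c : CSeries (fun n => c * a n)%C = (c * CSeries a)%C.
Proof.
  pose proof ex_series_fst; pose proof ex_series_snd.
  unfold CSeries, Cmult; simpl. f_equal.
  - rewrite Series_minus, !Series_scal_l; auto; apply ex_series_Rscal; auto.
  - rewrite Series_plus, !Series_scal_l; auto; apply ex_series_Rscal; auto.
Qed.

End CSeries.

Lemma CSeries_ext a b : (forall n, a n = b n) -> CSeries a = CSeries b.
Proof. intro H; unfold CSeries. f_equal; apply Series_ext; intro; rewrite H; auto. Qed.

Lemma CSeries_zero : CSeries (fun _ => 0%C) = 0%C.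
Proof. unfold CSeries; simpl. rewrite Series_zero. auto. Qed.

Lemma Cmod_sumZ_le a : inA a -> Cmod (sumZ a) <= 2 * normA a.
Proof.
  intro H. eapply Rle_trans; [apply Cmod_le_Rabs_fst_snd|]. unfold sumZ, normA; simpl.
  pose proof (sumZR_Rabs_le _ _ (fun n => Rabs_fst_le_Cmod (a n)) H).
  pose proof (sumZR_Rabs_le _ _ (fun n => Rabs_snd_le_Cmod (a n)) H). lra.
Qed.

(* Identities between complex series are proved through the real-linear forms
   [Clin al be], which commute with real series and separate points of C. *)
Definition Clin (al be : R) (z : C) : R := al * fst z + be * snd z.

Lemma Clin_inj (z w : C) : Clin 1 0 z = Clin 1 0 w -> Clin 0 1 z = Clin 0 1 w -> z = w.
Proof. unfold Clin. intros H1 H2. apply injective_projections; lra. Qed.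

Lemma Clin_mult al be w z :
  Clin al be (w * z)%C = Clin (al * fst w + be * snd w) (- al * snd w + be * fst w) z.
Proof. unfold Clin, Cmult; simpl; ring. Qed.

Lemma Rabs_Clin_le al be z : Rabs (Clin al be z) <= (Rabs al + Rabs be) * Cmod z.
Proof.
  unfold Clin. eapply Rle_trans; [apply Rabs_triang|]. rewrite !Rabs_mult.
  pose proof (Rabs_fst_le_Cmod z). pose proof (Rabs_snd_le_Cmod z).
  pose proof (Rabs_pos al). pose proof (Rabs_pos be).
  pose proof (Rabs_pos (fst z)). pose proof (Rabs_pos (snd z)). nra.
Qed.

Lemma Series_Clin al be w : ex_series (fun n => Cmod (w n)) ->
  Series (fun n => Clin al be (w n)) = Clin al be (CSeries w).
Proof.
  intro H. pose proof (ex_series_fst w H); pose proof (ex_series_snd w H).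
  unfold Clin, CSeries; simpl. rewrite Series_plus, !Series_scal_l; auto;
    apply ex_series_Rscal; auto.
Qed.

Lemma sumZR_Clin al be w : inA w -> sumZR (fun k => Clin al be (w k)) = Clin al be (sumZ w).
Proof.
  intro H.
  pose proof (ex_seriesZ_Rabs_le _ _ (fun k => Rabs_fst_le_Cmod (w k)) H).
  pose proof (ex_seriesZ_Rabs_le _ _ (fun k => Rabs_snd_le_Cmod (w k)) H).
  unfold Clin, sumZ; simpl. rewrite sumZR_plus, !sumZR_scal; auto; apply ex_seriesZ_scal; auto.
Qed.

Lemma normA_nonneg a : inA a -> 0 <= normA a.
Proof. intro H. apply sumZR_nonneg; auto. intro; apply Cmod_ge_0. Qed.

Lemma normA_ext a b : (forall z, Cmod (a z) = Cmod (b z)) -> normA a = normA b.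
Proof. intro H; apply sumZR_ext; auto. Qed.

Lemma inA_Cmod_bound a (v : Z -> R) : (forall z, Cmod (a z) <= v z) -> ex_seriesZ v -> inA a.
Proof.
  intros H Hv. apply (ex_seriesZ_Rabs_le (fun k => Cmod (a k)) v); [|exact Hv].
  intro z. rewrite Rabs_pos_eq by apply Cmod_ge_0. apply H.
Qed.

Lemma inA_Cmod_le a b : (forall z, Cmod (a z) <= Cmod (b z)) -> inA b -> inA a.
Proof. intros H Hb. exact (inA_Cmod_bound a _ H Hb). Qed.

Lemma inA_add a b : inA a -> inA b -> inA (addA a b).
Proof.
  intros Ha Hb. apply (inA_Cmod_bound (addA a b) (fun k => Cmod (a k) + Cmod (b k))).
  - intro z. apply Cmod_triangle.
  - apply ex_seriesZ_plus; auto.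
Qed.

Lemma inA_scal c a : inA a -> inA (scalA c a).
Proof.
  intros Ha. apply (inA_Cmod_bound (scalA c a) (fun k => Cmod c * Cmod (a k))).
  - intro z. unfold scalA. rewrite Cmod_mult. apply Rle_refl.
  - apply ex_seriesZ_scal; auto.
Qed.

Lemma inA_sub a b : inA a -> inA b -> inA (subA a b).
Proof.
  intros Ha Hb. apply (inA_Cmod_le _ (addA a (scalA (-1) b))); [|apply inA_add, inA_scal; auto].
  intro z. unfold subA, addA, scalA. right. f_equal. ring.
Qed.

Lemma normA_triangle a b : inA a -> inA b -> normA (addA a b) <= normA a + normA b.
Proof.
  intros Ha Hb. unfold normA. rewrite <- sumZR_plus; auto.
  apply sumZR_le; [intro; apply Cmod_triangle | apply inA_add | apply ex_seriesZ_plus]; auto.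
Qed.

Lemma normA_scal c a : normA (scalA c a) = Cmod c * normA a.
Proof. unfold normA, scalA. rewrite <- sumZR_scal. apply sumZR_ext. intro; apply Cmod_mult. Qed.

(* [sg] is an affine reindexing; the majorant controls [mulA h a j] whenever
   [a (j - k)] can be written as [b (n + sg k)]. *)
Lemma conv_majorant h b (sg : Z -> Z) : inA h -> inA b ->
  (forall n, ex_seriesZ (fun k => Cmod (h k) * Cmod (b (Z.of_nat n + sg k)%Z))) /\
  ex_series (fun n => sumZR (fun k => Cmod (h k) * Cmod (b (Z.of_nat n + sg k)%Z))).
Proof.
  intros Hh Hb.
  set (u := fun k n => Cmod (h k) * Cmod (b (Z.of_nat n + sg k)%Z)).
  assert (Hu : forall k n, Rabs (u k n) = u k n)
    by (intros; apply Rabs_pos_eq, Rmult_le_pos; apply Cmod_ge_0).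
  assert (Hrow : forall k, ex_series (u k) /\ Series (u k) <= Cmod (h k) * normA b).
  { intro k.
    destruct (Series_shift_le_sumZR (fun z => Cmod (b z)) (sg k) (fun _ => Cmod_ge_0 _) Hb) as [E1 E2].
    split; [apply ex_series_Rscal, E1|].
    unfold u; rewrite Series_scal_l. apply Rmult_le_compat_l; [apply Cmod_ge_0 | exact E2]. }
  destruct (sumZR_Series_swap u) as [A1 [A2 _]].
  - intro k. eapply ex_series_ext; [|apply (Hrow k)]. intro n; symmetry; apply Hu.
  - apply (ex_seriesZ_Rabs_le _ (fun k => normA b * Cmod (h k))); [|apply ex_seriesZ_scal, Hh].
    intro k. rewrite (Series_ext _ (u k)) by (intro; apply Hu). rewrite Rabs_pos_eq.
    + rewrite Rmult_comm. apply Hrow.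
    + apply Series_nonneg; [intro; rewrite <- Hu; apply Rabs_pos | apply Hrow].
  - split; [exact A1 | exact A2].
Qed.

Lemma mulA_term_bound h a b (sg : Z -> Z) (j : Z) n : inA h -> inA b ->
  (forall k, a (j - k)%Z = b (Z.of_nat n + sg k)%Z) ->
  inA (fun k => h k * a (j - k)%Z)%C /\
  Cmod (mulA h a j) <= 2 * sumZR (fun k => Cmod (h k) * Cmod (b (Z.of_nat n + sg k)%Z)).
Proof.
  intros Hh Hb He. destruct (conv_majorant h b sg Hh Hb) as [A1 _].
  assert (E : inA (fun k => h k * a (j - k)%Z)%C).
  { apply (inA_Cmod_bound _ (fun k => Cmod (h k) * Cmod (b (Z.of_nat n + sg k)%Z))); [|apply A1].
    intro k. rewrite Cmod_mult, He. apply Rle_refl. }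
  split; auto. unfold mulA. eapply Rle_trans; [apply Cmod_sumZ_le; auto|].
  apply Rmult_le_compat_l; [lra|]. right. apply sumZR_ext. intro k. rewrite Cmod_mult, He. auto.
Qed.

Lemma inA_mul h a : inA h -> inA a -> inA (mulA h a).
Proof.
  intros Hh Ha. split.
  - destruct (conv_majorant h a (fun k => - k)%Z Hh Ha) as [_ A2].
    eapply ex_series_Rabs_le; [|apply (ex_series_Rscal 2 _ A2)].
    intro n. rewrite Rabs_pos_eq by apply Cmod_ge_0.
    apply (mulA_term_bound h a a (fun k => - k)%Z (Z.of_nat n) n Hh Ha (fun k => eq_refl)).
  - (* negative frequencies: read [a] backwards *)
    set (ar := fun z => a (- z)%Z).
    assert (Har : inA ar).
    { destruct Ha as [H1 H2]. split.
      - apply (ex_series_incr_n _ 1). exact H2.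
      - apply (ex_series_incr_n _ 1) in H1. eapply ex_series_ext; [|exact H1].
        intro n. unfold ar. do 2 f_equal. }
    destruct (conv_majorant h ar (fun k => 1 + k)%Z Hh Har) as [_ A2].
    eapply ex_series_Rabs_le; [|apply (ex_series_Rscal 2 _ A2)].
    intro n. rewrite Rabs_pos_eq by apply Cmod_ge_0.
    apply (mulA_term_bound h a ar (fun k => 1 + k)%Z (- Z.of_nat (S n))%Z n Hh Har).
    intro k. unfold ar. f_equal. lia.
Qed.

Lemma sumZ_single (w : seqZ) k0 : (forall k, k <> k0 -> w k = 0%C) -> inA w /\ sumZ w = w k0.
Proof.
  intro H. unfold sumZ.
  destruct (sumZR_single (fun k => fst (w k)) k0) as [_ E1]; [intros k Hk; rewrite H; auto|].
  destruct (sumZR_single (fun k => snd (w k)) k0) as [_ E2]; [intros k Hk; rewrite H; auto|].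
  destruct (sumZR_single (fun k => Cmod (w k)) k0) as [E3 _]; [intros k Hk; rewrite H; auto; apply Cmod_0|].
  split; auto. rewrite E1, E2. destruct (w k0); auto.
Qed.

Lemma inA_zero : inA zeroA.
Proof. exact (proj1 (sumZ_single zeroA 0%Z (fun _ _ => eq_refl))). Qed.

(* The Fourier coefficients of the monomial z^m. *)
Definition delta (m : nat) : seqZ := fun k => if Z.eq_dec k (Z.of_nat m) then 1%C else 0%C.

Lemma delta_Aplus m : inAplus (delta m).
Proof.
  split.
  - apply (sumZ_single (delta m) (Z.of_nat m)).
    intros k Hk. unfold delta. destruct (Z.eq_dec k (Z.of_nat m)); tauto.
  - intros n Hn. unfold delta. destruct (Z.eq_dec n (Z.of_nat m)); auto. lia.
Qed.

Lemma normA_delta n : normA (delta n) = 1.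
Proof.
  unfold normA. destruct (sumZR_single (fun k => Cmod (delta n k)) (Z.of_nat n)) as [_ ->].
  - intros k Hk. unfold delta. destruct (Z.eq_dec k (Z.of_nat n)); [tauto | apply Cmod_0].
  - unfold delta. destruct (Z.eq_dec (Z.of_nat n) (Z.of_nat n)); [apply Cmod_1 | tauto].
Qed.

Lemma mulA_delta m a j : mulA (delta m) a j = a (j - Z.of_nat m)%Z.
Proof.
  unfold mulA. destruct (sumZ_single (fun k => delta m k * a (j - k)%Z)%C (Z.of_nat m)) as [_ ->].
  - intros k Hk. unfold delta. destruct (Z.eq_dec k (Z.of_nat m)); [tauto | ring].
  - unfold delta. destruct (Z.eq_dec (Z.of_nat m) (Z.of_nat m)); [ring | tauto].
Qed.

Lemma mulA_Aplus f b : inAplus f -> inAplus b -> inAplus (mulA f b).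
Proof.
  intros [Hf Hf0] [Hb Hb0]. split; [apply inA_mul; auto|].
  intros n Hn. unfold mulA, sumZ. rewrite !sumZR_zero; auto; intro k;
    (destruct (Z_lt_le_dec k 0); [rewrite Hf0 by auto | rewrite (Hb0 (n - k)%Z) by lia]);
    simpl; ring.
Qed.

Lemma sumZR_conv_comm (L : C -> R) (f b : seqZ) j :
  (forall x y, L (x * y)%C = L (y * x)%C) -> (forall z, L (0 * z)%C = 0) ->
  (forall n, (n < 0)%Z -> f n = 0%C) -> (forall n, (n < 0)%Z -> b n = 0%C) ->
  sumZR (fun k => L (f k * b (j - k)%Z)%C) = sumZR (fun k => L (b k * f (j - k)%Z)%C).
Proof.
  intros Hc H0 Hf Hb.
  assert (Z1 : forall x, L (x * 0)%C = 0) by (intro; rewrite Hc; auto).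
  destruct (Z_le_gt_dec 0 j).
  - set (N := Z.to_nat j).
    rewrite (sumZR_finite _ N), (sumZR_finite _ N).
    + rewrite psum_rev. apply psum_ext_loc. intros i Hi.
      replace (Z.of_nat (S N - 1 - i)) with (j - Z.of_nat i)%Z by (unfold N; lia).
      replace (j - (j - Z.of_nat i))%Z with (Z.of_nat i) by lia. apply Hc.
    + intros k [Hk|Hk]; [rewrite Hb by auto; apply H0 | rewrite (Hf (j - k)%Z) by (unfold N in Hk; lia); apply Z1].
    + intros k [Hk|Hk]; [rewrite Hf by auto; apply H0 | rewrite (Hb (j - k)%Z) by (unfold N in Hk; lia); apply Z1].
  - rewrite !sumZR_zero; auto; intro k; destruct (Z_lt_le_dec k 0).
    + rewrite Hb by auto; apply H0.
    + rewrite (Hf (j - k)%Z) by lia; apply Z1.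
    + rewrite Hf by auto; apply H0.
    + rewrite (Hb (j - k)%Z) by lia; apply Z1.
Qed.

Lemma mulA_comm (f b : seqZ) j : (forall n, (n < 0)%Z -> f n = 0%C) ->
  (forall n, (n < 0)%Z -> b n = 0%C) -> mulA f b j = mulA b f j.
Proof.
  intros Hf Hb. unfold mulA, sumZ. f_equal; apply sumZR_conv_comm; auto;
    intros; unfold Cmult; simpl; ring.
Qed.

(** * Shifts of a bounded functional on A^+ *)

(* For a bounded coefficient sequence [psi], [dual_shift psi h m] is the value
   at [z^m h] of the functional [b |-> sum_(n>=0) psi n * b n] on A(Gamma). *)
Definition dual_shift (psi : nat -> C) (h : seqZ) (m : Z) : C :=
  CSeries (fun n => psi n * h (Z.of_nat n - m)%Z)%C.

Lemma dual_shift_ext psi h h' m : (forall z, h z = h' z) ->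
  dual_shift psi h m = dual_shift psi h' m.
Proof. intro H. apply CSeries_ext. intro n. rewrite H. reflexivity. Qed.

Lemma dual_shift_zero psi m : dual_shift psi zeroA m = 0%C.
Proof. unfold dual_shift. rewrite <- CSeries_zero. apply CSeries_ext. intro. unfold zeroA. ring. Qed.

Section BoundedFunctional.

Variables (psi : nat -> C) (B : R).
Hypothesis Hpsi : forall n, Cmod (psi n) <= B.

Lemma bound_nonneg : 0 <= B.
Proof. eapply Rle_trans; [apply Cmod_ge_0 | apply (Hpsi 0%nat)]. Qed.

Lemma dual_shift_summable h m : inA h ->
  ex_series (fun n => Cmod (psi n * h (Z.of_nat n - m)%Z)%C) /\
  Series (fun n => Cmod (psi n * h (Z.of_nat n - m)%Z)%C) <= B * normA h.
Proof.
  intros Hh.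
  destruct (Series_shift_le_sumZR (fun z => Cmod (h z)) (- m) (fun _ => Cmod_ge_0 _) Hh) as [E1 E2].
  assert (Hc : forall n, Rabs (Cmod (psi n * h (Z.of_nat n - m)%Z)%C) <= B * Cmod (h (Z.of_nat n + - m)%Z)).
  { intro n. rewrite Rabs_pos_eq by apply Cmod_ge_0. rewrite Cmod_mult, Z.add_opp_r.
    apply Rmult_le_compat_r; auto. apply Cmod_ge_0. }
  assert (Ex : ex_series (fun n => Cmod (psi n * h (Z.of_nat n - m)%Z)%C))
    by (eapply ex_series_Rabs_le; [exact Hc | apply ex_series_Rscal, E1]).
  split; auto.
  eapply Rle_trans.
  - apply Series_le_ex; [intro n; eapply Rle_trans; [apply Rle_abs | apply Hc] | auto | apply ex_series_Rscal, E1].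
  - rewrite Series_scal_l. apply Rmult_le_compat_l; [apply bound_nonneg | exact E2].
Qed.

Lemma Cmod_dual_shift_le h m : inA h -> Cmod (dual_shift psi h m) <= 2 * (B * normA h).
Proof.
  intros Hh. destruct (dual_shift_summable h m Hh) as [E1 E2].
  eapply Rle_trans; [apply Cmod_CSeries_le; auto | lra].
Qed.

Lemma dual_shift_plus a b m : inA a -> inA b ->
  dual_shift psi (addA a b) m = (dual_shift psi a m + dual_shift psi b m)%C.
Proof.
  intros Ha Hb. unfold dual_shift. rewrite <- CSeries_plus by (apply dual_shift_summable; auto).
  apply CSeries_ext. intro n. unfold addA. ring.
Qed.

Lemma dual_shift_scal c a m : inA a -> dual_shift psi (scalA c a) m = (c * dual_shift psi a m)%C.
Proof.
  intros Ha. unfold dual_shift. rewrite <- CSeries_scal by (apply dual_shift_summable; auto).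
  apply CSeries_ext. intro n. unfold scalA. ring.
Qed.

Lemma dual_shift_sub a b m : inA a -> inA b ->
  dual_shift psi (subA a b) m = (dual_shift psi a m - dual_shift psi b m)%C.
Proof.
  intros Ha Hb.
  rewrite (dual_shift_ext _ _ (addA a (scalA (-1) b))) by (intro; unfold subA, addA, scalA; ring).
  rewrite dual_shift_plus, dual_shift_scal by (auto; apply inA_scal; auto). ring.
Qed.

Lemma dual_shift_mulA_swap al be h a m : inA h -> inA a ->
  sumZR (fun k => Series (fun n => Clin al be (psi n * (h k * a (Z.of_nat n - m - k)%Z))%C)) =
  Series (fun n => sumZR (fun k => Clin al be (psi n * (h k * a (Z.of_nat n - m - k)%Z))%C)).
Proof.
  intros Hh Ha.
  set (Y := fun n k => Clin al be (psi n * (h k * a (Z.of_nat n - m - k)%Z))%C).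
  set (W := fun (n : nat) k => Cmod (h k) * Cmod (a (Z.of_nat n + (- m - k))%Z)).
  set (c := (Rabs al + Rabs be) * B).
  pose proof bound_nonneg.
  assert (Hc : 0 <= c) by (unfold c; pose proof (Rabs_pos al); pose proof (Rabs_pos be); nra).
  destruct (conv_majorant h a (fun k => - m - k)%Z Hh Ha) as [W1 W2].
  assert (HY : forall n k, Rabs (Rabs (Y n k)) <= c * W n k).
  { intros n k. rewrite Rabs_Rabsolu. unfold Y. eapply Rle_trans; [apply Rabs_Clin_le|].
    rewrite !Cmod_mult. unfold c, W. replace (Z.of_nat n - m - k)%Z with (Z.of_nat n + (- m - k))%Z by lia.
    pose proof (Rabs_pos al); pose proof (Rabs_pos be).
    pose proof (Cmod_ge_0 (h k)); pose proof (Cmod_ge_0 (a (Z.of_nat n + (- m - k))%Z)).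
    rewrite Rmult_assoc. apply Rmult_le_compat_l; [lra|].
    apply Rmult_le_compat_r; [apply Rmult_le_pos; auto | apply Hpsi]. }
  assert (HYrow : forall n, ex_seriesZ (fun k => Rabs (Y n k)))
    by (intro n; exact (ex_seriesZ_Rabs_le _ _ (HY n) (ex_seriesZ_scal c _ (W1 n)))).
  destruct (Series_sumZR_swap Y HYrow) as [_ [_ Swap]]; [|exact Swap].
  apply (ex_series_Rabs_le _ (fun n => c * sumZR (W n))); [|apply ex_series_Rscal, W2].
  intro n. rewrite Rabs_pos_eq by (apply sumZR_nonneg; [intro; apply Rabs_pos | apply HYrow]).
  rewrite <- sumZR_scal. apply sumZR_le; [|apply HYrow | apply ex_seriesZ_scal, W1].
  intro k. eapply Rle_trans; [apply Rle_abs | apply HY].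
Qed.

Lemma Clin_dual_shift_mulA al be h a m : inA h -> inA a ->
  Clin al be (dual_shift psi (mulA h a) m) =
  Clin al be (sumZ (fun k => h k * dual_shift psi a (m + k)%Z)%C).
Proof.
  intros Hh Ha.
  assert (Hrhs : inA (fun k => h k * dual_shift psi a (m + k)%Z)%C).
  { apply (inA_Cmod_bound _ (fun k => (2 * (B * normA a)) * Cmod (h k))); [|apply ex_seriesZ_scal, Hh].
    intro k. rewrite Cmod_mult, Rmult_comm.
    apply Rmult_le_compat_r; [apply Cmod_ge_0 | apply Cmod_dual_shift_le; auto]. }
  assert (Hconv : forall n, inA (fun k => h k * a (Z.of_nat n - m - k)%Z)%C).
  { intro n. apply (mulA_term_bound h _ a (fun k => - m - k)%Z (Z.of_nat n - m)%Z n Hh Ha).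
    intro k; f_equal; lia. }
  unfold dual_shift at 1. rewrite <- Series_Clin by (apply dual_shift_summable, inA_mul; auto).
  rewrite <- sumZR_Clin by exact Hrhs.
  rewrite (Series_ext _ (fun n => sumZR (fun k => Clin al be (psi n * (h k * a (Z.of_nat n - m - k)%Z))%C))).
  - rewrite <- dual_shift_mulA_swap by auto. apply sumZR_ext. intro k.
    rewrite Clin_mult. unfold dual_shift. rewrite <- Series_Clin by (apply dual_shift_summable; auto).
    apply Series_ext. intro n. rewrite <- Clin_mult. f_equal.
    replace (Z.of_nat n - (m + k))%Z with (Z.of_nat n - m - k)%Z by lia. ring.
  - intro n. rewrite Clin_mult. unfold mulA. rewrite <- sumZR_Clin by apply Hconv.
    apply sumZR_ext. intro k. rewrite <- Clin_mult. do 3 f_equal.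
Qed.

Lemma dual_shift_mulA h a m : inA h -> inA a ->
  dual_shift psi (mulA h a) m = sumZ (fun k => h k * dual_shift psi a (m + k)%Z)%C.
Proof. intros; apply Clin_inj; apply Clin_dual_shift_mulA; auto. Qed.

(** * The closed ideal of A(Gamma) attached to a functional on A^+ *)

(* The closed ideal J_psi of A(Gamma).  It contains every ideal of A^+
   annihilated by [psi], as such an ideal is stable under multiplication by z^m. *)
Definition vanishing_shifts (h : seqZ) : Prop :=
  inA h /\ is_lim_seq (fun m => Cmod (dual_shift psi h (Z.of_nat m))) 0.

Lemma vanishing_shifts_add a b :
  vanishing_shifts a -> vanishing_shifts b -> vanishing_shifts (addA a b).
Proof.
  intros [Ha La] [Hb Lb]. split; [apply inA_add; auto|].
  apply (is_lim_seq_0_Rabs_le _ (fun m => Cmod (dual_shift psi a (Z.of_nat m)) +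
                                          Cmod (dual_shift psi b (Z.of_nat m)))).
  - intro m. rewrite Rabs_pos_eq by apply Cmod_ge_0. rewrite dual_shift_plus by auto. apply Cmod_triangle.
  - replace (Finite 0) with (Finite (0 + 0)) by (f_equal; ring). apply is_lim_seq_plus'; auto.
Qed.

Lemma vanishing_shifts_scal c a : vanishing_shifts a -> vanishing_shifts (scalA c a).
Proof.
  intros [Ha La]. split; [apply inA_scal; auto|].
  replace (Finite 0) with (Rbar_mult (Cmod c) 0) by (simpl; f_equal; ring).
  eapply is_lim_seq_ext; [|apply (is_lim_seq_scal_l _ (Cmod c) 0 La)].
  intro m. simpl. rewrite dual_shift_scal, Cmod_mult by auto. reflexivity.
Qed.

Lemma vanishing_shifts_mul h a : inA h -> vanishing_shifts a -> vanishing_shifts (mulA h a).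
Proof.
  intros Hh [Ha La]. split; [apply inA_mul; auto|].
  set (U := fun k => Cmod (h k) * (2 * (B * normA a))).
  assert (Hf : forall m k, 0 <= Cmod (h k) * Cmod (dual_shift psi a (Z.of_nat m + k)%Z) <= U k).
  { intros m k. split; [apply Rmult_le_pos; apply Cmod_ge_0|].
    apply Rmult_le_compat_l; [apply Cmod_ge_0 | apply Cmod_dual_shift_le; auto]. }
  assert (HU : ex_seriesZ U).
  { apply (ex_seriesZ_Rabs_le _ (fun k => (2 * (B * normA a)) * Cmod (h k))); [|apply ex_seriesZ_scal, Hh].
    intro k. unfold U. rewrite Rabs_pos_eq; [lra|]. apply (Rle_trans _ _ _ (proj1 (Hf 0%nat k)) (proj2 (Hf 0%nat k))). }
  assert (Lk : forall k, is_lim_seq (fun m => Cmod (dual_shift psi a (Z.of_nat m + k)%Z)) 0).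
  { intro k. destruct (Z_nat_cases k) as [[q ->] | [q ->]].
    - apply (is_lim_seq_incr_n _ q) in La.
      eapply is_lim_seq_ext; [|exact La]. intro n. cbv beta. rewrite Nat2Z.inj_add. reflexivity.
    - apply (is_lim_seq_incr_n _ (S q)).
      eapply is_lim_seq_ext; [|exact La]. intro n. cbv beta. do 3 f_equal. lia. }
  apply (is_lim_seq_0_Rabs_le _ (fun m => 2 * sumZR (fun k => Cmod (h k) * Cmod (dual_shift psi a (Z.of_nat m + k)%Z)))).
  - intro m. rewrite Rabs_pos_eq by apply Cmod_ge_0. rewrite dual_shift_mulA by auto.
    eapply Rle_trans; [apply Cmod_sumZ_le|].
    + apply (inA_Cmod_bound _ U); [|exact HU]. intro k. rewrite Cmod_mult. apply Hf.
    + right. f_equal. apply sumZR_ext. intro; apply Cmod_mult.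
  - replace (Finite 0) with (Rbar_mult 2 0) by (simpl; f_equal; ring).
    apply is_lim_seq_scal_l. apply (is_lim_seq_sumZR_dominated _ U); auto.
    intro k. replace (Finite 0) with (Rbar_mult (Cmod (h k)) 0) by (simpl; f_equal; ring).
    apply is_lim_seq_scal_l, Lk.
Qed.

Lemma vanishing_shifts_closed a : inA a ->
  (forall eps, 0 < eps -> exists b, vanishing_shifts b /\ normA (subA a b) < eps) ->
  vanishing_shifts a.
Proof.
  intros Ha Happ. split; auto. pose proof bound_nonneg.
  apply is_lim_seq_spec. intro eps.
  set (e2 := eps / (4 * (B + 1))).
  assert (He2 : 0 < e2) by (unfold e2; destruct eps; simpl; apply Rdiv_lt_0_compat; lra).
  destruct (Happ e2 He2) as [b [[Hb Lb] Hab]].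
  apply is_lim_seq_spec in Lb. assert (Heps2 : 0 < eps / 2) by (destruct eps; simpl; lra).
  destruct (Lb (mkposreal _ Heps2)) as [N HN]. exists N. intros m Hm.
  specialize (HN m Hm). simpl in HN. rewrite Rminus_0_r, Rabs_pos_eq in * by apply Cmod_ge_0.
  replace (dual_shift psi a (Z.of_nat m)) with
    (dual_shift psi b (Z.of_nat m) + dual_shift psi (subA a b) (Z.of_nat m))%C
    by (rewrite dual_shift_sub by auto; ring).
  eapply Rle_lt_trans; [apply Cmod_triangle|].
  assert (Cmod (dual_shift psi (subA a b) (Z.of_nat m)) <= 2 * (B * normA (subA a b)))
    by (apply Cmod_dual_shift_le, inA_sub; auto).
  assert (2 * (B * normA (subA a b)) <= 2 * (B * e2)) by (apply Rmult_le_compat_l; [lra|]; apply Rmult_le_compat_l; lra).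
  assert (2 * (B * e2) < eps / 2).
  { unfold e2. destruct eps as [e pe]; simpl in *.
    replace (2 * (B * (e / (4 * (B + 1))))) with (e / 2 * (B / (B + 1))) by (field; lra).
    assert (B / (B + 1) < 1) by (apply Rmult_lt_reg_r with (B + 1); [lra|];
      unfold Rdiv; rewrite Rmult_assoc, Rinv_l by lra; lra).
    nra. }
  lra.
Qed.

Lemma closed_ideal_vanishing_shifts : closed_ideal_A vanishing_shifts.
Proof.
  split; [intros a [H _]; exact H|].
  split; [split; [apply inA_zero|]|].
  { eapply is_lim_seq_ext; [|apply is_lim_seq_const]. intro; rewrite dual_shift_zero, Cmod_0; auto. }
  split; [exact vanishing_shifts_add|].
  split; [exact vanishing_shifts_scal|].
  split; [exact vanishing_shifts_mul | exact vanishing_shifts_closed].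
Qed.

Lemma annihilated_ideal_vanishing_shifts (I : seqZ -> Prop) :
  (forall a, I a -> inAplus a) -> (forall h a, inAplus h -> I a -> I (mulA h a)) ->
  (forall y, I y -> dual_shift psi y 0 = 0%C) ->
  forall g, I g -> vanishing_shifts g.
Proof.
  intros HIA HImul HI0 g Hg. split; [apply HIA; auto|].
  eapply is_lim_seq_ext; [|apply is_lim_seq_const]. intro m.
  replace (dual_shift psi g (Z.of_nat m)) with (dual_shift psi (mulA (delta m) g) 0).
  - rewrite HI0, Cmod_0; auto. apply HImul; auto. apply delta_Aplus.
  - apply CSeries_ext. intro n. rewrite mulA_delta. do 2 f_equal. lia.
Qed.

Lemma pairing_dual_shift f b : inA f -> inAplus b ->
  pairing b (fun m => dual_shift psi f (Z.of_nat m)) = dual_shift psi (mulA b f) 0.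
Proof.
  intros Hf [Hb Hb0]. rewrite dual_shift_mulA by auto.
  unfold pairing, sumZ, sumZR. cbn [fst snd].
  rewrite (Series_ext (fun n => fst (b (- Z.of_nat (S n))%Z * _)%C) (fun _ => 0)),
          (Series_ext (fun n => snd (b (- Z.of_nat (S n))%Z * _)%C) (fun _ => 0)), Series_zero
    by (intro n; rewrite Hb0 by lia; unfold Cmult; simpl; ring).
  rewrite !Rplus_0_r. reflexivity.
Qed.

End BoundedFunctional.

(** * Hahn-Banach separation in A^+ *)

(* The real-linear span of [x], [z^n] and [i z^n] (n >= 0) is dense in A^+;
   [hb_vector x] enumerates these vectors as x, z^0, i z^0, z^1, i z^1, ... *)
Definition hb_vector (x : seqZ) (j : nat) : seqZ :=
  match j with
  | 0%nat => x
  | S j' => if Nat.odd j' then scalA Ci (delta (Nat.div2 j')) else delta (Nat.div2 j')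
  end.

Definition hb_comb (x : seqZ) (t : nat -> R) (k : nat) : seqZ :=
  fun z => (psum (fun j => t j * fst (hb_vector x j z)) k, psum (fun j => t j * snd (hb_vector x j z)) k).

Lemma hb_vector_odd x n : hb_vector x (2 * n + 1) = delta n.
Proof.
  replace (2 * n + 1)%nat with (S (2 * n)) by lia. cbn [hb_vector].
  rewrite Nat.odd_even, Nat.div2_double. reflexivity.
Qed.

Lemma hb_vector_even x n : hb_vector x (2 * n + 2) = scalA Ci (delta n).
Proof.
  replace (2 * n + 2)%nat with (S (S (2 * n))) by lia. cbn [hb_vector].
  replace (S (2 * n)) with (2 * n + 1)%nat by lia. rewrite Nat.odd_odd.
  replace (2 * n + 1)%nat with (S (2 * n)) by lia. rewrite Nat.div2_succ_double. reflexivity.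
Qed.

Lemma hb_comb_S x t k z :
  hb_comb x t (S k) z = (hb_comb x t k z + RtoC (t k) * hb_vector x k z)%C.
Proof. unfold hb_comb. simpl. C_componentwise. Qed.

Lemma hb_comb_plus x t t' k z :
  hb_comb x (fun j => t j + t' j) k z = (hb_comb x t k z + hb_comb x t' k z)%C.
Proof. unfold hb_comb, Cplus. simpl. f_equal; rewrite <- psum_plus; apply psum_ext; intro; ring. Qed.

Lemma hb_comb_scal x r t k z : hb_comb x (fun j => r * t j) k z = (RtoC r * hb_comb x t k z)%C.
Proof.
  unfold hb_comb, RtoC, Cmult. simpl. f_equal.
  - rewrite Rmult_0_l, Rminus_0_r, <- psum_scal. apply psum_ext; intro; ring.
  - rewrite Rmult_0_l, Rplus_0_r, <- psum_scal. apply psum_ext; intro; ring.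
Qed.

Lemma inA_hb_vector x j : inA x -> inA (hb_vector x j).
Proof.
  intro Hx. destruct j; simpl; auto.
  destruct (Nat.odd j); [apply inA_scal|]; apply delta_Aplus.
Qed.

Lemma inA_hb_comb x t k : inA x -> inA (hb_comb x t k).
Proof.
  intro Hx. induction k.
  - apply (inA_Cmod_le _ zeroA); [|apply inA_zero]. intro z. right; reflexivity.
  - apply (inA_Cmod_le _ (addA (hb_comb x t k) (scalA (RtoC (t k)) (hb_vector x k)))).
    + intro z. rewrite hb_comb_S. right; reflexivity.
    + apply inA_add, inA_scal, inA_hb_vector; auto.
Qed.

(* [a j] is the value on [hb_vector x j] of a real functional vanishing on [I]
   and dominated by the norm on [I + span (hb_vector x j, j < k)]. *)
Definition dominated_at (x : seqZ) (k : nat) (a : nat -> R) (m : seqZ) (t : nat -> R) : Prop :=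
  psum (fun j => t j * a j) k <= normA (addA m (hb_comb x t k)).

Definition dominated (I : seqZ -> Prop) (x : seqZ) (k : nat) (a : nat -> R) : Prop :=
  forall m t, I m -> dominated_at x k a m t.

Definition update (a : nat -> R) (k : nat) (c : R) : nat -> R :=
  fun j => if Nat.eqb j k then c else a j.

Lemma dominated_at_scale x k a m t r : 0 < r ->
  dominated_at x k a (scalA (RtoC (/ r)) m) (fun j => / r * t j) -> dominated_at x k a m t.
Proof.
  unfold dominated_at. intros Hr H.
  rewrite (psum_ext _ (fun j => / r * (t j * a j))), psum_scal in H by (intro; ring).
  rewrite (normA_ext _ (scalA (RtoC (/ r)) (addA m (hb_comb x t k)))), normA_scal, Cmod_R,
    Rabs_pos_eq in H by (try (intro z; unfold scalA, addA; rewrite hb_comb_scal; f_equal; ring);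
                         apply Rlt_le, Rinv_0_lt_compat; auto).
  apply Rmult_le_reg_l with (/ r); [apply Rinv_0_lt_compat; auto | exact H].
Qed.

Lemma dominated_at_update x k a c m t :
  dominated_at x (S k) (update a k c) m t <->
  psum (fun j => t j * a j) k + t k * c <=
    normA (addA (addA m (hb_comb x t k)) (scalA (RtoC (t k)) (hb_vector x k))).
Proof.
  unfold dominated_at. simpl psum. unfold update at 2. rewrite Nat.eqb_refl.
  rewrite (psum_ext_loc _ (fun j => t j * a j)).
  - rewrite (normA_ext _ (addA (addA m (hb_comb x t k)) (scalA (RtoC (t k)) (hb_vector x k)))); [tauto|].
    intro z. unfold addA, scalA. rewrite hb_comb_S. f_equal. ring.
  - intros j Hj. unfold update. destruct (Nat.eqb_spec j k); [lia | reflexivity].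
Qed.

Section HahnBanach.

Variables (I : seqZ -> Prop) (x : seqZ).
Hypothesis HIA : forall a, I a -> inA a.
Hypothesis HI0 : I zeroA.
Hypothesis HIadd : forall a b, I a -> I b -> I (addA a b).
Hypothesis HIscal : forall c a, I a -> I (scalA c a).
Hypothesis Hx : inA x.

(* The one-dimensional extension step: the new value [c] is squeezed between
   the supremum of the lower and the infimum of the upper constraints. *)
Lemma dominated_step k a : dominated I x k a -> exists c, dominated I x (S k) (update a k c).
Proof.
  intros P.
  set (phi := fun t => psum (fun j => t j * a j) k).
  set (N := fun m t s => normA (addA (addA m (hb_comb x t k)) (scalA (RtoC s) (hb_vector x k)))).
  assert (Key : forall m t m' t', I m -> I m' -> phi t - N m t (-1) <= N m' t' 1 - phi t').
  { intros m t m' t' Hm Hm'.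
    assert (Hsum : phi t + phi t' <= N m t (-1) + N m' t' 1).
    { apply (Rle_trans _ (normA (addA (addA m m') (hb_comb x (fun j => t j + t' j) k)))).
      - unfold phi. rewrite <- psum_plus, (psum_ext _ (fun j => (t j + t' j) * a j)) by (intro; ring).
        apply P; auto.
      - unfold N. rewrite <- normA_triangle by
          (apply inA_add; [apply inA_add; auto; apply inA_hb_comb; auto | apply inA_scal, inA_hb_vector; auto]).
        right. apply normA_ext. intro z. unfold addA, scalA. rewrite hb_comb_plus. f_equal. C_componentwise. }
    lra. }
  set (E := fun r => exists m t, I m /\ r = phi t - N m t (-1)).
  destruct (completeness E) as [c [Hub Hlub]].
  - exists (N zeroA (fun _ => 0) 1 - phi (fun _ => 0)).
    intros r [m [t [Hm ->]]]. apply Key; auto.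
  - exists (phi (fun _ => 0) - N zeroA (fun _ => 0) (-1)). exists zeroA, (fun _ => 0). auto.
  - assert (Lo : forall m t, I m -> phi t - N m t (-1) <= c) by (intros m t Hm; apply Hub; exists m, t; auto).
    assert (Up : forall m t, I m -> c <= N m t 1 - phi t).
    { intros m t Hm. apply Hlub. intros r [m' [t' [Hm' ->]]]. apply Key; auto. }
    exists c. intros m t Hm.
    destruct (total_order_T (t k) 0) as [[Hneg | Hz] | Hpos].
    + apply (dominated_at_scale _ _ _ _ _ (- t k)); [lra|]. apply dominated_at_update. cbv beta.
      replace (/ - t k * t k) with (-1) by (field; lra).
      specialize (Lo _ (fun j => / - t k * t j) (HIscal (RtoC (/ - t k)) _ Hm)). unfold N, phi in Lo. lra.
    + apply dominated_at_update. rewrite Hz, Rmult_0_l, Rplus_0_r.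
      rewrite (normA_ext _ (addA m (hb_comb x t k))); [apply P; auto|].
      intro z. unfold addA, scalA. f_equal. C_componentwise.
    + apply (dominated_at_scale _ _ _ _ _ (t k)); [lra|]. apply dominated_at_update. cbv beta.
      replace (/ t k * t k) with 1 by (field; lra).
      specialize (Up _ (fun j => / t k * t j) (HIscal (RtoC (/ t k)) _ Hm)). unfold N, phi in Up. lra.
Qed.

Lemma dominated_base dl : 0 <= dl -> (forall b, I b -> dl <= normA (subA x b)) ->
  dominated I x 1 (fun _ => dl).
Proof.
  intros Hdl Hd m t Hm.
  destruct (Rle_dec (t 0%nat) 0).
  - unfold dominated_at. simpl.
    pose proof (normA_nonneg _ (inA_add _ _ (HIA _ Hm) (inA_hb_comb x t 1 Hx))). nra.
  - apply (dominated_at_scale _ _ _ _ _ (t 0%nat)); [lra|]. unfold dominated_at. simpl.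
    replace (0 + / t 0%nat * t 0%nat * dl) with dl by (field; lra).
    rewrite (normA_ext _ (subA x (scalA (RtoC (-1)) (scalA (RtoC (/ t 0%nat)) m)))).
    + apply Hd, HIscal, HIscal, Hm.
    + intro z. f_equal. unfold addA, subA, scalA, hb_comb, RtoC. simpl.
      apply injective_projections; simpl; field; lra.
Qed.

Lemma dominated_ext k a b :
  (forall j, (j < k)%nat -> a j = b j) -> dominated I x k a -> dominated I x k b.
Proof.
  intros H P m t Hm. unfold dominated_at.
  rewrite <- (psum_ext_loc (fun j => t j * a j)); [apply P; auto|].
  intros j Hj; rewrite H; auto.
Qed.

Fixpoint hb_coeffs (dl : R) (n : nat) : nat -> R :=
  match n with
  | 0%nat => fun _ => dl
  | S n => update (hb_coeffs dl n) (S n)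
      (epsilon (inhabits 0) (fun c => dominated I x (S (S n)) (update (hb_coeffs dl n) (S n) c)))
  end.

Lemma dominated_exists dl : 0 <= dl -> (forall b, I b -> dl <= normA (subA x b)) ->
  exists a : nat -> R, a 0%nat = dl /\ forall n, dominated I x (S n) a.
Proof.
  intros Hdl Hd.
  assert (Inv : forall n, dominated I x (S n) (hb_coeffs dl n)).
  { induction n; [apply dominated_base; auto|].
    apply (epsilon_spec (inhabits 0) (fun c => dominated I x (S (S n)) (update (hb_coeffs dl n) (S n) c))).
    apply dominated_step; auto. }
  assert (Stable : forall n j, (j <= n)%nat -> hb_coeffs dl n j = hb_coeffs dl j j).
  { induction n; intros j Hj.
    - replace j with 0%nat by lia. reflexivity.
    - destruct (Nat.eq_dec j (S n)); [subst; reflexivity|].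
      simpl. unfold update. destruct (Nat.eqb_spec j (S n)); [lia|]. apply IHn; lia. }
  exists (fun j => hb_coeffs dl j j). split; [reflexivity|].
  intro n. apply (dominated_ext (S n) (hb_coeffs dl n)); auto.
  intros j Hj. apply Stable. lia.
Qed.

Lemma dominated_coeff_bound a j0 : dominated I x (S j0) a -> Rabs (a j0) <= normA (hb_vector x j0).
Proof.
  intros P.
  set (e := fun s j => if Nat.eqb j j0 then s else 0).
  assert (He : forall (u : nat -> R) s, psum (fun j => e s j * u j) (S j0) = s * u j0).
  { intros u s. rewrite (psum_single _ j0).
    - destruct (Compare_dec.lt_dec j0 (S j0)); [|lia]. unfold e. rewrite Nat.eqb_refl. reflexivity.
    - intros n Hn. unfold e. destruct (Nat.eqb_spec n j0); [lia | ring]. }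
  assert (G : forall s, Rabs s = 1 -> s * a j0 <= normA (hb_vector x j0)).
  { intros s Hs. specialize (P zeroA (e s) HI0). unfold dominated_at in P. rewrite He in P.
    rewrite (normA_ext _ (scalA (RtoC s) (hb_vector x j0))), normA_scal, Cmod_R, Hs, Rmult_1_l in P; auto.
    intro z. unfold addA, zeroA, scalA, hb_comb. rewrite !He. f_equal. C_componentwise. }
  unfold Rabs. destruct (Rcase_abs (a j0)).
  - replace (- a j0) with (-1 * a j0) by ring. apply G. rewrite Rabs_left by lra. ring.
  - replace (a j0) with (1 * a j0) at 1 by ring. apply G, Rabs_R1.
Qed.

Lemma dominated_coeffs_le_1 a : (forall n, dominated I x (S n) a) ->
  forall n, Rabs (a (2 * n + 1)%nat) <= 1 /\ Rabs (a (2 * n + 2)%nat) <= 1.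
Proof.
  intros P n. split.
  - rewrite <- (normA_delta n), <- (hb_vector_odd x n). apply dominated_coeff_bound, P.
  - rewrite <- (normA_delta n), <- (Rmult_1_l (normA (delta n))), <- Cmod_Ci, <- normA_scal,
      <- (hb_vector_even x n).
    apply dominated_coeff_bound, P.
Qed.

End HahnBanach.

(* Coordinates along [hb_vector x] of an element of A^+ with finite support. *)
Definition hb_coord (y : seqZ) (j : nat) : R :=
  match j with
  | 0%nat => 0
  | S j' => if Nat.odd j' then snd (y (Z.of_nat (Nat.div2 j'))) else fst (y (Z.of_nat (Nat.div2 j')))
  end.

Lemma hb_coord_odd y n : hb_coord y (2 * n + 1) = fst (y (Z.of_nat n)).
Proof.
  replace (2 * n + 1)%nat with (S (2 * n)) by lia. cbn [hb_coord].
  rewrite Nat.odd_even, Nat.div2_double. reflexivity.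
Qed.

Lemma hb_coord_even y n : hb_coord y (2 * n + 2) = snd (y (Z.of_nat n)).
Proof.
  replace (2 * n + 2)%nat with (S (2 * n + 1)) by lia. cbn [hb_coord]. rewrite Nat.odd_odd.
  replace (2 * n + 1)%nat with (S (2 * n)) by lia. rewrite Nat.div2_succ_double. reflexivity.
Qed.

Definition truncate (K : nat) (y : seqZ) : seqZ :=
  fun z => if Z_lt_dec z 0 then 0%C else if Z_lt_dec z (Z.of_nat K) then y z else 0%C.

Definition hb_partial (a : nat -> R) (y : seqZ) (K : nat) : R :=
  psum (fun n => a (2 * n + 1)%nat * fst (y (Z.of_nat n)) + a (2 * n + 2)%nat * snd (y (Z.of_nat n))) K.

(* The coefficients of [s0 * x + s * truncate K y] along [hb_vector x]. *)
Definition hb_trunc_coeffs (y : seqZ) (s0 s : R) (j : nat) : R :=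
  (if Nat.eqb j 0 then s0 else 0) + s * hb_coord y j.

Lemma psum_hb_trunc_coeffs y s0 s a K :
  psum (fun j => hb_trunc_coeffs y s0 s j * a j) (2 * K + 1) = s0 * a 0%nat + s * hb_partial a y K.
Proof.
  rewrite psum_pairs. unfold hb_trunc_coeffs at 1, hb_partial. simpl hb_coord.
  rewrite <- psum_scal. f_equal; [simpl; ring|].
  apply psum_ext. intro n. unfold hb_trunc_coeffs. rewrite hb_coord_odd, hb_coord_even.
  replace (Nat.eqb (2 * n + 1) 0) with false by (symmetry; apply Nat.eqb_neq; lia).
  replace (Nat.eqb (2 * n + 2) 0) with false by (symmetry; apply Nat.eqb_neq; lia). ring.
Qed.

Lemma psum_indicator (r : nat -> R) z K :
  psum (fun n => if Z.eq_dec z (Z.of_nat n) then r n else 0) K =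
  if Z_lt_dec z 0 then 0 else if Z_lt_dec z (Z.of_nat K) then r (Z.to_nat z) else 0.
Proof.
  destruct (Z_lt_dec z 0) as [Hz|Hz].
  - rewrite (psum_ext _ (fun _ => 0)), psum_zero; auto.
    intro n. destruct (Z.eq_dec z (Z.of_nat n)); auto; lia.
  - rewrite (psum_single _ (Z.to_nat z)).
    + destruct (Compare_dec.lt_dec (Z.to_nat z) K), (Z_lt_dec z (Z.of_nat K)); try lia; auto.
      destruct (Z.eq_dec z (Z.of_nat (Z.to_nat z))); auto; lia.
    + intros n Hn. destruct (Z.eq_dec z (Z.of_nat n)); auto. lia.
Qed.

Lemma hb_comb_truncate x y s0 s K z :
  hb_comb x (hb_trunc_coeffs y s0 s) (2 * K + 1) z = (RtoC s0 * x z + RtoC s * truncate K y z)%C.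
Proof.
  unfold hb_comb. apply injective_projections; cbn [fst snd]; rewrite psum_pairs;
    [ rewrite (psum_ext _ (fun n => s * (if Z.eq_dec z (Z.of_nat n) then fst (y (Z.of_nat n)) else 0)))
    | rewrite (psum_ext _ (fun n => s * (if Z.eq_dec z (Z.of_nat n) then snd (y (Z.of_nat n)) else 0))) ].
  1, 3: rewrite psum_scal, psum_indicator; unfold hb_trunc_coeffs, truncate, RtoC; simpl;
        destruct (Z_lt_dec z 0); [simpl; ring|];
        destruct (Z_lt_dec z (Z.of_nat K)); simpl; [rewrite Z2Nat.id by lia|]; ring.
  all: intro n; rewrite hb_vector_odd, hb_vector_even; unfold hb_trunc_coeffs;
       rewrite hb_coord_odd, hb_coord_even;
       replace (Nat.eqb (2 * n + 1) 0) with false by (symmetry; apply Nat.eqb_neq; lia);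
       replace (Nat.eqb (2 * n + 2) 0) with false by (symmetry; apply Nat.eqb_neq; lia);
       unfold scalA, Ci, delta; destruct (Z.eq_dec z (Z.of_nat n)); simpl; ring.
Qed.

Lemma normA_sub_truncate y K : inAplus y ->
  normA (subA y (truncate K y)) =
  Series (fun n => Cmod (y (Z.of_nat n))) - psum (fun n => Cmod (y (Z.of_nat n))) K.
Proof.
  intros [[Hy _] Hy0]. unfold normA, sumZR.
  rewrite (Series_ext (fun n => Cmod (subA y (truncate K y) (- Z.of_nat (S n))%Z)) (fun _ => 0)), Series_zero.
  2: { intro n. unfold subA, truncate. destruct (Z_lt_dec _ 0); [|lia].
       rewrite Hy0 by lia. replace (RtoC 0 - RtoC 0)%C with (RtoC 0) by ring. apply Cmod_0. }
  rewrite (Series_incr_n_aux _ K).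
  2: { intros k Hk. unfold subA, truncate. destruct (Z_lt_dec (Z.of_nat k) 0); [lia|].
       destruct (Z_lt_dec (Z.of_nat k) (Z.of_nat K)); [|lia]. replace (y (Z.of_nat k) - y (Z.of_nat k))%C with (RtoC 0) by ring. apply Cmod_0. }
  destruct (Series_split _ K Hy) as [_ ->].
  rewrite (Series_ext _ (fun k => Cmod (y (Z.of_nat (K + k))))); [ring|].
  intro k. unfold subA, truncate. destruct (Z_lt_dec (Z.of_nat (K + k)) 0); [lia|].
  destruct (Z_lt_dec (Z.of_nat (K + k)) (Z.of_nat K)); [lia|]. f_equal. ring.
Qed.

Lemma is_lim_seq_normA_sub_truncate y : inAplus y ->
  is_lim_seq (fun K => normA (subA y (truncate K y))) 0.
Proof.
  intros Hy. eapply is_lim_seq_ext; [intro K; symmetry; apply normA_sub_truncate, Hy|].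
  replace (Finite 0) with (Finite (Series (fun n => Cmod (y (Z.of_nat n))) -
                                   Series (fun n => Cmod (y (Z.of_nat n))))) by (f_equal; ring).
  apply is_lim_seq_minus'; [apply is_lim_seq_const | apply is_lim_seq_psum_Series, Hy].
Qed.

Lemma dominated_truncate I x a y m s0 s K : (forall n, dominated I x (S n) a) -> I m ->
  s0 * a 0%nat + s * hb_partial a y K <=
    normA (addA m (fun z => RtoC s0 * x z + RtoC s * truncate K y z)%C).
Proof.
  intros P Hm. specialize (P (2 * K)%nat). replace (S (2 * K)) with (2 * K + 1)%nat in P by lia.
  specialize (P m (hb_trunc_coeffs y s0 s) Hm). unfold dominated_at in P.
  rewrite psum_hb_trunc_coeffs in P. eapply Rle_trans; [exact P|].
  right. apply normA_ext. intro z. unfold addA. rewrite hb_comb_truncate. reflexivity.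
Qed.

(* Real part of the separating functional. *)
Definition hb_functional (a : nat -> R) (y : seqZ) : R :=
  Series (fun n => a (2 * n + 1)%nat * fst (y (Z.of_nat n)) + a (2 * n + 2)%nat * snd (y (Z.of_nat n))).

Lemma is_lim_seq_hb_partial a y :
  (forall n, Rabs (a (2 * n + 1)%nat) <= 1 /\ Rabs (a (2 * n + 2)%nat) <= 1) -> inA y ->
  is_lim_seq (hb_partial a y) (hb_functional a y).
Proof.
  intros Hb [Hy _]. apply is_lim_seq_psum_Series.
  apply (ex_series_Rabs_le _ (fun n => 2 * Cmod (y (Z.of_nat n)))); [|apply ex_series_Rscal, Hy].
  intro n. destruct (Hb n) as [B1 B2].
  eapply Rle_trans; [apply Rabs_triang|]. rewrite !Rabs_mult.
  pose proof (Rabs_fst_le_Cmod (y (Z.of_nat n))). pose proof (Rabs_snd_le_Cmod (y (Z.of_nat n))).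
  pose proof (Rabs_pos (fst (y (Z.of_nat n)))). pose proof (Rabs_pos (snd (y (Z.of_nat n)))).
  pose proof (Rabs_pos (a (2 * n + 1)%nat)). pose proof (Rabs_pos (a (2 * n + 2)%nat)). nra.
Qed.

Lemma lim_eq_0_of_Rabs_le (U Rs : nat -> R) (u : R) : is_lim_seq U u -> is_lim_seq Rs 0 ->
  (forall K, Rabs (U K) <= Rs K) -> u = 0.
Proof.
  intros HU HR H.
  assert (Rabs u <= 0) by (apply (is_lim_seq_Rle (fun K => Rabs (U K)) Rs); auto; apply (is_lim_seq_abs _ u HU)).
  pose proof (Rabs_pos u). apply Rabs_eq_0. lra.
Qed.

Section Separation.

Variables (I : seqZ -> Prop) (x : seqZ) (a : nat -> R).
Hypothesis HIA : forall b, I b -> inAplus b.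
Hypothesis HI0 : I zeroA.
Hypothesis HIscal : forall c b, I b -> I (scalA c b).
Hypothesis Hx : inAplus x.
Hypothesis Hdom : forall n, dominated I x (S n) a.
Hypothesis Hbound : forall n, Rabs (a (2 * n + 1)%nat) <= 1 /\ Rabs (a (2 * n + 2)%nat) <= 1.

Lemma hb_functional_annihilates y : I y -> hb_functional a y = 0.
Proof.
  intros Hy.
  apply (lim_eq_0_of_Rabs_le (hb_partial a y) (fun K => normA (subA y (truncate K y)))).
  - apply is_lim_seq_hb_partial, HIA; auto.
  - apply is_lim_seq_normA_sub_truncate, HIA, Hy.
  - intro K. apply Rabs_le. split.
    + pose proof (dominated_truncate I x a y y 0 (-1) K Hdom Hy) as E.
      rewrite (normA_ext _ (subA y (truncate K y))) in E by (intro z; unfold addA, subA; f_equal; C_componentwise).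
      lra.
    + pose proof (dominated_truncate I x a y (scalA (RtoC (-1)) y) 0 1 K Hdom (HIscal _ _ Hy)) as E.
      rewrite (normA_ext _ (subA y (truncate K y))) in E.
      * lra.
      * intro z. unfold addA, subA, scalA. rewrite <- Cmod_opp. f_equal. C_componentwise.
Qed.

Lemma hb_functional_at_x : hb_functional a x = a 0%nat.
Proof.
  cut (a 0%nat - hb_functional a x = 0); [lra|].
  apply (lim_eq_0_of_Rabs_le (fun K => a 0%nat - hb_partial a x K) (fun K => normA (subA x (truncate K x)))).
  - apply is_lim_seq_minus'; [apply is_lim_seq_const | apply is_lim_seq_hb_partial, Hx; auto].
  - apply is_lim_seq_normA_sub_truncate, Hx.
  - intro K. apply Rabs_le. split.
    + pose proof (dominated_truncate I x a x zeroA (-1) 1 K Hdom HI0) as E.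
      rewrite (normA_ext _ (subA x (truncate K x))) in E.
      * lra.
      * intro z. unfold addA, subA, zeroA. rewrite <- Cmod_opp. f_equal. C_componentwise.
    + pose proof (dominated_truncate I x a x zeroA 1 (-1) K Hdom HI0) as E.
      rewrite (normA_ext _ (subA x (truncate K x))) in E by (intro z; unfold addA, subA, zeroA; f_equal; C_componentwise).
      lra.
Qed.

End Separation.

Lemma closed_ideal_dist_pos (I : seqZ -> Prop) x : closed_ideal_Aplus I -> inAplus x -> ~ I x ->
  exists dl, 0 < dl /\ forall b, I b -> dl <= normA (subA x b).
Proof.
  intros [_ [_ [_ [_ [_ HIcl]]]]] Hx HnI. apply NNPP. intro Hno.
  apply HnI, HIcl; auto. intros eps Heps. apply NNPP. intro Hfar.
  apply Hno. exists eps. split; auto. intros b Hb.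
  apply Rnot_lt_le. intro Hlt. apply Hfar. exists b. auto.
Qed.

Theorem separating_functional (I : seqZ -> Prop) x : closed_ideal_Aplus I -> inAplus x -> ~ I x ->
  exists psi : nat -> C, (forall n, Cmod (psi n) <= 2) /\
    (forall y, I y -> dual_shift psi y 0 = 0%C) /\ dual_shift psi x 0 <> 0%C.
Proof.
  intros HI Hx HnI.
  destruct (closed_ideal_dist_pos I x HI Hx HnI) as [dl [Hdl Hd]].
  destruct HI as [HIA [HI0 [HIadd [HIscal _]]]].
  assert (HIA' : forall b, I b -> inA b) by (intros b Hb; apply HIA, Hb).
  destruct (dominated_exists I x HIA' HI0 HIadd HIscal (proj1 Hx) dl (Rlt_le _ _ Hdl) Hd) as [a [Ha0 Hdom]].
  pose proof (dominated_coeffs_le_1 I x HI0 a Hdom) as Hb.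
  (* [psi] is the complexification of the real functional [hb_functional a]. *)
  set (psi := fun n => (a (2 * n + 1)%nat, - a (2 * n + 2)%nat) : C).
  assert (Hpsi : forall y, dual_shift psi y 0 = (hb_functional a y, hb_functional a (scalA (0, -1) y))).
  { intro y. unfold dual_shift, CSeries, hb_functional.
    f_equal; apply Series_ext; intro n; rewrite Z.sub_0_r; unfold psi, scalA, Cmult; simpl; ring. }
  exists psi. split; [|split].
  - intro n. eapply Rle_trans; [apply Cmod_le_Rabs_fst_snd|]. unfold psi. cbn [fst snd].
    rewrite Rabs_Ropp. destruct (Hb n). lra.
  - intros y Hy. rewrite Hpsi, !(hb_functional_annihilates I x a); auto.
  - rewrite Hpsi, (hb_functional_at_x I x a), Ha0; auto. intro E. injection E. lra.
Qed.

(** * The division ideal is weak-* closed *)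

(* [f] lies in the closed ideal of A(Gamma) on which the shifts of [psi]
   vanish, so these shifts form a [c_0] sequence representing [b |-> psi (f b)]. *)
Lemma c0_representative (I : seqZ -> Prop) f psi B :
  closed_ideal_Aplus I -> inAplus f -> gen_closed_ideal_A I f ->
  (forall n, Cmod (psi n) <= B) -> (forall y, I y -> dual_shift psi y 0 = 0%C) ->
  in_c0 (fun m => dual_shift psi f (Z.of_nat m)) /\
  forall b, inAplus b -> pairing b (fun m => dual_shift psi f (Z.of_nat m)) = dual_shift psi (mulA f b) 0.
Proof.
  intros [HIA [_ [_ [_ [HImul _]]]]] Hf Hgen Hpsi HIz.
  destruct (Hgen _ (closed_ideal_vanishing_shifts psi B Hpsi)
              (annihilated_ideal_vanishing_shifts psi I HIA HImul HIz)) as [HfA Hc0].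
  split; [exact Hc0|].
  intros b Hb. rewrite (pairing_dual_shift psi B) by auto.
  apply CSeries_ext. intro n. rewrite mulA_comm; [reflexivity | apply Hb | apply Hf].
Qed.

Theorem lemma3p1 (I : seqZ -> Prop) (f : seqZ) :
  closed_ideal_Aplus I ->
  inAplus f ->
  gen_closed_ideal_A I f ->
  weakstar_closed (division_ideal I f).
Proof.
  intros HI Hf Hgen.
  split; [intros a [Ha _]; exact Ha|].
  split; [intros a [Ha _]; exact Ha|].
  intros g [Hg Hng].
  assert (HnI : ~ I (mulA f g)) by (intro H; apply Hng; split; auto).
  destruct (separating_functional I (mulA f g) HI (mulA_Aplus f g Hf Hg) HnI) as [psi [Hpsi [HIz Hne]]].
  destruct (c0_representative I f psi 2 HI Hf Hgen Hpsi HIz) as [Hc0 Hpair].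
  set (c := fun m : nat => dual_shift psi f (Z.of_nat m)) in *.
  assert (Hpos : 0 < Cmod (pairing g c)).
  { rewrite Hpair by auto. destruct (Cmod_ge_0 (dual_shift psi (mulA f g) 0)) as [|E]; auto.
    exfalso. apply Hne, Cmod_eq_0. auto. }
  exists (c :: nil), (Cmod (pairing g c)). split; [exact Hpos|]. split.
  - intros c' [<- | []]. exact Hc0.
  - intros b Hb Hnear. split; auto. intros [_ HIb].
    specialize (Hnear c (or_introl eq_refl)).
    rewrite (Hpair b Hb), (HIz _ HIb) in Hnear.
    replace (0 - pairing g c)%C with (- pairing g c)%C in Hnear by ring.
    rewrite Cmod_opp in Hnear. lra.
Qed.
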